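(* Let $h$ be a harmonic function on $\mathbf D$ and $B>0$ a constant such that $|h(z)|\le B|z|$ for all $z\in\mathbf D$ and $\max_{1/6<r<1/3}h(re^{i\theta})\ge1$ for every $\theta\in[0,2\pi)$. If the integer $A$ is large enough, then the series $u(z)=\sum_{k=0}^\infty A^kh\big(z^{2^{A^k}}\big)$ converges in $\mathbf D$ to a function of class $\mathcal K$, and for some $d>0$, $$\limsup_{r\to1}\frac{u(re^{i\theta})}{|\log(1-r)|}\ge d\quad\text{for every }\theta\in[0,2\pi).$$
   Context: $\mathbf D$ is the open unit disc. $\mathcal K$ is the class of harmonic functions $u$ on $\mathbf D$ for which there is a constant $C$ with $u(z)\le C\log\frac{e}{1-|z|}$ for all $z\in\mathbf D$. *)

From Stdlib Require Export Reals.
From Coquelicot Require Export Coquelicot.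
Open Scope R_scope.

Definition inD (z : C) : Prop := Cmod z < 1.

Definition dx (u : C -> R) (z : C) : R := Derive (fun t => u (t, snd z)) (fst z).
Definition dy (u : C -> R) (z : C) : R := Derive (fun t => u (fst z, t)) (snd z).

Definition C2_at (u : C -> R) (z : C) : Prop :=
  ex_derive (fun t => u (t, snd z)) (fst z) /\
  ex_derive (fun t => u (fst z, t)) (snd z) /\
  ex_derive (fun t => dx u (t, snd z)) (fst z) /\
  ex_derive (fun t => dx u (fst z, t)) (snd z) /\
  ex_derive (fun t => dy u (t, snd z)) (fst z) /\
  ex_derive (fun t => dy u (fst z, t)) (snd z) /\
  continuous u z /\ continuous (dx u) z /\ continuous (dy u) z /\
  continuous (dx (dx u)) z /\ continuous (dy (dx u)) z /\
  continuous (dx (dy u)) z /\ continuous (dy (dy u)) z.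

Definition harmonic_on_D (u : C -> R) : Prop :=
  forall z, inD z -> C2_at u z /\ dx (dx u) z + dy (dy u) z = 0.

Definition classK (u : C -> R) : Prop :=
  harmonic_on_D u /\
  exists Cst : R, forall z, inD z -> u z <= Cst * ln (exp 1 / (1 - Cmod z)).

Definition polar (r theta : R) : C := (r * cos theta, r * sin theta).

(** Write [N_k = 2^(A^k)]. On a disc [|z| <= rho < 1] the summand [A^k h(z^(N_k))] and its
    partial derivatives of order at most two are bounded by a constant times
    [A^k N_k^2 rho^(N_k - 2)], which is summable in [k]; so the series can be differentiated
    twice term by term, and the sum is harmonic because each summand is: up to a constant it
    is [h] composed with the holomorphic map [z |-> z^N].

    If [|z| = 1 - t], then [|A^k h(z^(N_k))| <= B A^k exp (- t N_k)]. The indices with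
    [t N_k <= 1] have [A^k <= log2 (1/t)] and, [A^k] at least doubling, contribute
    [O(log (1/t))]; the remaining ones contribute [O(log (1/t))] times the sum of the
    [1/(t N_k) < 1], which at least halve.

    For the lower bound on the ray of angle [theta], take [m] large and [r] with
    [r^(N_m) = rho], where [h (rho e^(i N_m theta)) > 3/4]. Then the [m]-th summand is at least
    [3/4 A^m], the earlier ones add up to at most [A^m / 8] when [A >= 8 B + 1], the later ones
    to [O(B A)] because [r^(N_k)] decays doubly exponentially, and [|log (1 - r)| <= 2 A^m]. *)

From Stdlib Require Import Lra Lia Psatz.

(** * Series of functions *)

Lemma Series_tail_small (M : nat -> R) : ex_series M ->
  forall eps, 0 < eps -> exists N, forall n, (N <= n)%nat ->
    Rabs (Series (fun k => M (S n + k)%nat)) < eps.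
Proof.
  intros HM eps Heps.
  assert (Hlim : is_lim_seq (sum_n M) (Series M)) by exact (Series_correct _ HM).
  apply is_lim_seq_spec in Hlim.
  destruct (Hlim (mkposreal eps Heps)) as [N HN].
  exists N. intros n Hn. specialize (HN n Hn).
  rewrite (Series_incr_n M (S n)), sum_n_Reals in HN by (lia || exact HM).
  simpl pred in HN.
  replace (sum_f_R0 M n - (sum_f_R0 M n + Series (fun k => M (S n + k)%nat)))
    with (- Series (fun k => M (S n + k)%nat)) in HN by ring.
  rewrite Rabs_Ropp in HN. exact HN.
Qed.

Lemma ex_series_le_eventually (b M : nat -> R) (K : nat) :
  (forall k, (K <= k)%nat -> Rabs (b k) <= M k) -> ex_series M -> ex_series b.
Proof.
  intros Hb HM.
  apply (ex_series_incr_n b K).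
  apply (ex_series_le (fun k => b (K + k)%nat) (fun k => M (K + k)%nat)).
  - intros k. apply Hb. lia.
  - apply (ex_series_incr_n M K). exact HM.
Qed.

Lemma ex_series_Rabs_le_eventually (b M : nat -> R) (K : nat) :
  (forall k, (K <= k)%nat -> Rabs (b k) <= M k) -> ex_series M ->
  ex_series (fun k => Rabs (b k)).
Proof.
  intros Hb HM. apply (ex_series_le_eventually _ M K); auto.
  intros k Hk. rewrite Rabs_Rabsolu. auto.
Qed.

Lemma Series_le_of_partial (b : nat -> R) (X : R) :
  ex_series b -> (forall n, sum_f_R0 b n <= X) -> Series b <= X.
Proof.
  intros Hb HX.
  assert (Hlim : is_lim_seq (sum_n b) (Series b)) by exact (Series_correct _ Hb).
  apply (is_lim_seq_le (sum_n b) (fun _ => X) (Series b) X); auto.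
  - intros n. rewrite sum_n_Reals. apply HX.
  - apply is_lim_seq_const.
Qed.

Lemma Series_tail_abs_le (b M : nat -> R) (K n : nat) :
  (forall k, (K <= k)%nat -> Rabs (b k) <= M k) -> ex_series M -> (K <= n)%nat ->
  Rabs (Series (fun k => b (n + k)%nat)) <= Series (fun k => M (n + k)%nat).
Proof.
  intros Hb HM Hn.
  assert (HM' : ex_series (fun k => M (n + k)%nat)) by (apply ex_series_incr_n; exact HM).
  assert (Hb' : ex_series (fun k => Rabs (b (n + k)%nat))).
  { apply (ex_series_Rabs_le_eventually _ (fun k => M (n + k)%nat) 0); auto.
    intros k _. apply Hb. lia. }
  eapply Rle_trans; [apply Series_Rabs, Hb'|].
  apply Series_le; auto. intros k. split; [apply Rabs_pos | apply Hb; lia].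
Qed.

Section Tannery.

(* [P d x] reads "x lies in the d-neighbourhood" of the limit point; shrinking d shrinks it. *)
Variables (T : Type) (P : R -> T -> Prop).
Hypothesis P_mono : forall d1 d2 x, d1 <= d2 -> P d1 x -> P d2 x.

Lemma sum_f_R0_small (c : nat -> T -> R) :
  (forall k eps, 0 < eps -> exists d, 0 < d /\ forall x, P d x -> Rabs (c k x) < eps) ->
  forall m eps, 0 < eps ->
    exists d, 0 < d /\ forall x, P d x -> Rabs (sum_f_R0 (fun k => c k x) m) < eps.
Proof.
  intros Hc m. induction m as [|m IH]; intros eps Heps.
  - apply Hc. exact Heps.
  - destruct (IH (eps/2)) as [d1 [Hd1 H1]]; [lra|].
    destruct (Hc (S m) (eps/2)) as [d2 [Hd2 H2]]; [lra|].
    exists (Rmin d1 d2). split; [apply Rmin_pos; auto|].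
    intros x Hx. simpl.
    assert (A1 := H1 x (P_mono _ _ _ (Rmin_l _ _) Hx)).
    assert (A2 := H2 x (P_mono _ _ _ (Rmin_r _ _) Hx)).
    eapply Rle_lt_trans; [apply Rabs_triang | lra].
Qed.

Lemma tannery (a : nat -> T -> R) (L M : nat -> R) (K : nat) (d0 : R) :
  0 < d0 ->
  (forall k eps, 0 < eps -> exists d, 0 < d /\ forall x, P d x -> Rabs (a k x - L k) < eps) ->
  (forall k x, (K <= k)%nat -> P d0 x -> Rabs (a k x) <= M k) ->
  (forall k, (K <= k)%nat -> Rabs (L k) <= M k) ->
  ex_series M ->
  forall eps, 0 < eps -> exists d, 0 < d /\ forall x, P d x ->
     Rabs (Series (fun k => a k x) - Series L) < eps.
Proof.
  intros Hd0 Hlim Hba HbL HM eps Heps.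
  destruct (Series_tail_small M HM (eps/4)) as [N HN]; [lra|].
  set (n := max N K).
  destruct (sum_f_R0_small (fun k x => a k x - L k) Hlim n (eps/4)) as [d1 [Hd1 H1]]; [lra|].
  exists (Rmin d0 d1). split; [apply Rmin_pos; auto|].
  intros x Hx.
  assert (Hx0 := P_mono _ _ _ (Rmin_l _ _) Hx).
  assert (Hx1 := P_mono _ _ _ (Rmin_r _ _) Hx).
  assert (Exa : ex_series (fun k => a k x)) by (apply (ex_series_le_eventually _ M K); auto).
  assert (ExL : ex_series L) by (apply (ex_series_le_eventually _ M K); auto).
  rewrite (Series_incr_n _ (S n)), (Series_incr_n L (S n)) by (lia || auto).
  simpl pred.
  assert (Ta := Series_tail_abs_le (fun k => a k x) M K (S n)
                  (fun k Hk => Hba k x Hk Hx0) HM ltac:(lia)).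
  assert (TL := Series_tail_abs_le L M K (S n) HbL HM ltac:(lia)).
  assert (TM := HN n ltac:(lia)).
  assert (F := H1 x Hx1). rewrite (minus_sum (fun k => a k x) L) in F.
  assert (Hpos : 0 <= Series (fun k => M (S n + k)%nat)) by (eapply Rle_trans; [apply Rabs_pos | exact TL]).
  rewrite Rabs_pos_eq in TM by exact Hpos.
  set (A1 := sum_f_R0 (fun k => a k x) n) in *.
  set (A2 := sum_f_R0 L n) in *.
  set (B1 := Series (fun k => a (S n + k)%nat x)) in *.
  set (B2 := Series (fun k => L (S n + k)%nat)) in *.
  replace (A1 + B1 - (A2 + B2)) with ((A1 - A2) + (B1 - B2)) by ring.
  eapply Rle_lt_trans; [apply Rabs_triang|].
  assert (Rabs (B1 - B2) <= Rabs B1 + Rabs B2).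
  { unfold Rminus. eapply Rle_trans; [apply Rabs_triang|]. rewrite Rabs_Ropp. lra. }
  lra.
Qed.

End Tannery.

Lemma is_derive_Series (g g' : nat -> R -> R) (x0 d0 : R) (M : nat -> R) (K : nat) :
  0 < d0 ->
  (forall k t, Rabs (t - x0) < d0 -> is_derive (g k) t (g' k t)) ->
  (forall k t, (K <= k)%nat -> Rabs (t - x0) < d0 -> Rabs (g' k t) <= M k) ->
  ex_series M ->
  (forall t, Rabs (t - x0) < d0 -> ex_series (fun k => g k t)) ->
  is_derive (fun t => Series (fun k => g k t)) x0 (Series (fun k => g' k x0)).
Proof.
  intros Hd0 Hd Hb HM Hex.
  assert (Hx0 : Rabs (x0 - x0) < d0) by (rewrite Rminus_eq_0, Rabs_R0; lra).
  apply is_derive_Reals. intros eps Heps.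
  destruct (tannery _ (fun d u => u <> 0 /\ Rabs u < d)
    (fun d1 d2 u Hle Hu => conj (proj1 Hu) (Rlt_le_trans _ _ _ (proj2 Hu) Hle))
    (fun k u => (g k (x0 + u) - g k x0) / u) (fun k => g' k x0) M K d0 Hd0)
    with (eps := eps) as [d [Hdpos Hfin]]; auto.
  - intros k e He.
    assert (D := Hd k x0 Hx0). apply is_derive_Reals in D.
    destruct (D e He) as [dl Hdl].
    exists dl. split; [apply cond_pos|]. intros u [Hu1 Hu2]. apply Hdl; auto.
  - (* the mean value theorem bounds each difference quotient by [M k] *)
    intros k u Hk [Hu0 Hu].
    assert (Hmvt : Rabs (g k (x0 + u) - g k x0) <= M k * Rabs (x0 + u - x0)).
    { apply (bounded_variation (g k) (g' k)). intros t Ht.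
      replace (x0 + u - x0) with u in Ht by ring.
      split; [apply Hd | apply Hb]; auto; lra. }
    replace (x0 + u - x0) with u in Hmvt by ring.
    unfold Rdiv. rewrite Rabs_mult, Rabs_inv.
    apply (Rmult_le_reg_r (Rabs u)); [apply Rabs_pos_lt; auto|].
    rewrite Rmult_assoc, Rinv_l by (apply Rabs_no_R0; auto). lra.
  - assert (Hm : 0 < Rmin d d0) by (apply Rmin_pos; auto).
    exists (mkposreal _ Hm). intros u Hu0 Hu. simpl in Hu.
    assert (Hu1 : Rabs u < d) by (eapply Rlt_le_trans; [exact Hu | apply Rmin_l]).
    assert (Hu2 : Rabs (x0 + u - x0) < d0).
    { replace (x0 + u - x0) with u by ring. eapply Rlt_le_trans; [exact Hu | apply Rmin_r]. }
    specialize (Hfin u (conj Hu0 Hu1)).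
    unfold Rdiv in Hfin. rewrite Series_scal_r, Series_minus in Hfin by auto.
    exact Hfin.
Qed.

Lemma continuous_C_ball (f : C -> R) (z0 : C) :
  continuous f z0 <->
  forall eps, 0 < eps -> exists d, 0 < d /\ forall z, ball z0 d z -> Rabs (f z - f z0) < eps.
Proof.
  split.
  - intros Hc eps Heps.
    assert (H : locally z0 (fun z => ball (f z0) eps (f z))).
    { apply Hc. exists (mkposreal eps Heps). intros y Hy. exact Hy. }
    destruct H as [d Hd]. exists d. split; [apply cond_pos | exact Hd].
  - intros H P [eps HP].
    destruct (H eps (cond_pos eps)) as [d [Hd Hz]].
    exists (mkposreal d Hd). intros z Hz'. apply HP, Hz, Hz'.
Qed.

Lemma continuous_Series (g : nat -> C -> R) (z0 : C) (d0 : R) (M : nat -> R) (K : nat) :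
  0 < d0 ->
  (forall k, continuous (g k) z0) ->
  (forall k z, (K <= k)%nat -> ball z0 d0 z -> Rabs (g k z) <= M k) ->
  ex_series M ->
  continuous (fun z => Series (fun k => g k z)) z0.
Proof.
  intros Hd0 Hc Hb HM. apply continuous_C_ball. intros eps Heps.
  apply (tannery _ (fun d z => ball z0 d z) (fun d1 d2 z Hle Hz => ball_le z0 d1 d2 Hle z Hz)
           g (fun k => g k z0) M K d0); auto.
  - intros k. apply continuous_C_ball, Hc.
  - intros k Hk. apply Hb; auto. apply (ball_center z0 (mkposreal d0 Hd0)).
Qed.

Lemma continuous_Cpow (n : nat) (z : C) :
  continuous (fun w => fst (Cpow w n)) z /\ continuous (fun w => snd (Cpow w n)) z.
Proof.
  assert (Hfst : continuous (fun w : C => fst w) z) by (destruct z; apply continuous_fst).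
  assert (Hsnd : continuous (fun w : C => snd w) z) by (destruct z; apply continuous_snd).
  assert (Cmul : forall f g : C -> R, continuous f z -> continuous g z ->
                   continuous (fun w => f w * g w) z)
    by (intros; apply (continuous_mult (K:=R_AbsRing)); auto).
  induction n as [|n [IH1 IH2]]; simpl; split.
  - apply continuous_const.
  - apply continuous_const.
  - apply (continuous_minus (V:=R_NormedModule)); apply Cmul; auto.
  - apply (continuous_plus (V:=R_NormedModule)); apply Cmul; auto.
Qed.

Lemma continuous_comp_Cpow (F : C -> R) (n : nat) (z : C) :
  continuous F (Cpow z n) -> continuous (fun w => F (Cpow w n)) z.
Proof.
  intros HF. apply continuous_C_ball. intros e He.
  destruct (proj1 (continuous_C_ball F _) HF e He) as [d [Hd HFd]].
  destruct (continuous_Cpow n z) as [C1 C2].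
  destruct (proj1 (continuous_C_ball _ _) C1 d Hd) as [d1 [Hd1 H1]].
  destruct (proj1 (continuous_C_ball _ _) C2 d Hd) as [d2 [Hd2 H2]].
  exists (Rmin d1 d2). split; [apply Rmin_pos; auto|].
  intros w Hw. apply HFd. split.
  - apply H1. eapply ball_le; [apply Rmin_l | exact Hw].
  - apply H2. eapply ball_le; [apply Rmin_r | exact Hw].
Qed.

(** * Partial derivatives of [z^N] *)

Lemma is_derive_Rmult (f g : R -> R) (x a b : R) : is_derive f x a -> is_derive g x b ->
  is_derive (fun t => f t * g t) x (a * g x + f x * b).
Proof. rewrite !is_derive_Reals. apply derivable_pt_lim_mult. Qed.

Lemma is_derive_Rplus (f g : R -> R) (x a b : R) : is_derive f x a -> is_derive g x b ->
  is_derive (fun t => f t + g t) x (a + b).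
Proof. rewrite !is_derive_Reals. apply derivable_pt_lim_plus. Qed.

Lemma is_derive_Rminus (f g : R -> R) (x a b : R) : is_derive f x a -> is_derive g x b ->
  is_derive (fun t => f t - g t) x (a - b).
Proof. rewrite !is_derive_Reals. apply derivable_pt_lim_minus. Qed.

Lemma is_derive_Rconst (c x : R) : is_derive (fun _ => c) x 0.
Proof. apply is_derive_Reals, derivable_pt_lim_const. Qed.

Lemma is_derive_Rid (x : R) : is_derive (fun t => t) x 1.
Proof. apply is_derive_Reals, derivable_pt_lim_id. Qed.

Lemma is_derive_eq_rhs (f : R -> R) (x a b : R) : is_derive f x a -> a = b -> is_derive f x b.
Proof. intros H <-. exact H. Qed.

Lemma Cpow_S (z : C) (n : nat) :
  Cpow z (S n) = (fst z * fst (Cpow z n) - snd z * snd (Cpow z n),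
                  fst z * snd (Cpow z n) + snd z * fst (Cpow z n)).
Proof. reflexivity. Qed.

(* Real and imaginary parts of the complex derivative [N z^(N-1)] of [z^N]. *)
Definition dpow_re (z : C) (N : nat) : R := INR N * fst (Cpow z (N - 1)).
Definition dpow_im (z : C) (N : nat) : R := INR N * snd (Cpow z (N - 1)).

(* [N - 1] is truncated subtraction, hence the case split at [N = 0]. *)
Ltac Cpow_ring n :=
  destruct n as [|m];
  [ cbn [Cpow]; replace (0 - 1)%nat with 0%nat by lia; cbn [fst snd]; simpl; ring
  | replace (S (S m) - 1)%nat with (S m) by lia; replace (S m - 1)%nat with m by lia;
    rewrite !Cpow_S; cbn [fst snd]; rewrite (S_INR (S m));
    change (AbsRing.sort R_AbsRing) with R; ring ].

Lemma is_derive_Cpow_x (x y : R) (N : nat) :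
  is_derive (fun t => fst (Cpow (t, y) N)) x (dpow_re (x, y) N) /\
  is_derive (fun t => snd (Cpow (t, y) N)) x (dpow_im (x, y) N).
Proof.
  unfold dpow_re, dpow_im.
  induction N as [|n [IH1 IH2]].
  - simpl. split; eapply is_derive_eq_rhs; try apply is_derive_Rconst; ring.
  - split.
    + change (is_derive (fun t => t * fst (Cpow (t, y) n) - y * snd (Cpow (t, y) n)) x
        (INR (S n) * fst (Cpow (x, y) (S n - 1)))).
      eapply is_derive_eq_rhs.
      { apply is_derive_Rminus; apply is_derive_Rmult;
          [apply is_derive_Rid | exact IH1 | apply is_derive_Rconst | exact IH2]. }
      cbv beta. Cpow_ring n.
    + change (is_derive (fun t => t * snd (Cpow (t, y) n) + y * fst (Cpow (t, y) n)) x
        (INR (S n) * snd (Cpow (x, y) (S n - 1)))).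
      eapply is_derive_eq_rhs.
      { apply is_derive_Rplus; apply is_derive_Rmult;
          [apply is_derive_Rid | exact IH2 | apply is_derive_Rconst | exact IH1]. }
      cbv beta. Cpow_ring n.
Qed.

Lemma is_derive_Cpow_y (x y : R) (N : nat) :
  is_derive (fun t => fst (Cpow (x, t) N)) y (- dpow_im (x, y) N) /\
  is_derive (fun t => snd (Cpow (x, t) N)) y (dpow_re (x, y) N).
Proof.
  unfold dpow_re, dpow_im.
  induction N as [|n [IH1 IH2]].
  - simpl. split; eapply is_derive_eq_rhs; try apply is_derive_Rconst; ring.
  - split.
    + change (is_derive (fun t => x * fst (Cpow (x, t) n) - t * snd (Cpow (x, t) n)) y
        (- (INR (S n) * snd (Cpow (x, y) (S n - 1))))).
      eapply is_derive_eq_rhs.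
      { apply is_derive_Rminus; apply is_derive_Rmult;
          [apply is_derive_Rconst | exact IH1 | apply is_derive_Rid | exact IH2]. }
      cbv beta. Cpow_ring n.
    + change (is_derive (fun t => x * snd (Cpow (x, t) n) + t * fst (Cpow (x, t) n)) y
        (INR (S n) * fst (Cpow (x, y) (S n - 1)))).
      eapply is_derive_eq_rhs.
      { apply is_derive_Rplus; apply is_derive_Rmult;
          [apply is_derive_Rconst | exact IH2 | apply is_derive_Rid | exact IH1]. }
      cbv beta. Cpow_ring n.
Qed.

Lemma snd_le_Cmod (z : C) : Rabs (snd z) <= Cmod z.
Proof.
  destruct z as [a b]. unfold Cmod. simpl. rewrite <- sqrt_Rsqr_abs.
  apply sqrt_le_1_alt. unfold Rsqr. nra.
Qed.

Lemma Cmod_le_abs_sum (z : C) : Cmod z <= Rabs (fst z) + Rabs (snd z).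
Proof.
  destruct z as [a b]. unfold Cmod. simpl.
  assert (Ha := Rabs_pos a). assert (Hb := Rabs_pos b).
  rewrite <- (sqrt_Rsqr (Rabs a + Rabs b)) by lra.
  apply sqrt_le_1_alt. unfold Rsqr.
  assert (a * a = Rabs a * Rabs a) by (rewrite <- Rabs_mult, Rabs_pos_eq; nra).
  assert (b * b = Rabs b * Rabs b) by (rewrite <- Rabs_mult, Rabs_pos_eq; nra).
  nra.
Qed.

Lemma Cmod_le_of_ball (z0 z : C) :
  ball z0 ((1 - Cmod z0) / 4) z -> Cmod z <= (1 + Cmod z0) / 2.
Proof.
  intros [H1 H2]. change (Rabs (fst z - fst z0) < (1 - Cmod z0) / 4) in H1.
  change (Rabs (snd z - snd z0) < (1 - Cmod z0) / 4) in H2.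
  assert (E : z = Cplus z0 (fst z - fst z0, snd z - snd z0)).
  { destruct z, z0. unfold Cplus. simpl. f_equal; ring. }
  assert (Hz := Cmod_triangle z0 (fst z - fst z0, snd z - snd z0)).
  assert (Hd := Cmod_le_abs_sum (fst z - fst z0, snd z - snd z0)). simpl in Hd.
  rewrite <- E in Hz. lra.
Qed.

Lemma inD_of_ball (z0 z : C) : inD z0 -> ball z0 ((1 - Cmod z0) / 4) z -> inD z.
Proof. unfold inD. intros Hz0 Hz. apply Cmod_le_of_ball in Hz. lra. Qed.

Lemma locally_inD (z0 : C) : inD z0 -> locally z0 inD.
Proof.
  intros Hz0. assert (Hd : 0 < (1 - Cmod z0) / 4) by (unfold inD in Hz0; lra).
  exists (mkposreal _ Hd). intros z Hz. exact (inD_of_ball z0 z Hz0 Hz).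
Qed.

Lemma locally_inD_x (x y : R) : inD (x, y) -> locally x (fun t => inD (t, y)).
Proof.
  intros Hz. destruct (locally_inD _ Hz) as [d Hd].
  exists d. intros t Ht. apply Hd. split; [exact Ht | apply ball_center].
Qed.

Lemma locally_inD_y (x y : R) : inD (x, y) -> locally y (fun t => inD (x, t)).
Proof.
  intros Hz. destruct (locally_inD _ Hz) as [d Hd].
  exists d. intros t Ht. apply Hd. split; [apply ball_center | exact Ht].
Qed.

Lemma inD_Cpow (z : C) (N : nat) : inD z -> (1 <= N)%nat -> inD (Cpow z N).
Proof.
  unfold inD. intros Hz HN. rewrite Cmod_pow.
  apply pow_lt_1_compat; [split; [apply Cmod_ge_0 | exact Hz] | lia].
Qed.

Definition C1_on_D (F : C -> R) : Prop := forall w, inD w ->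
  ex_derive (fun t => F (t, snd w)) (fst w) /\ ex_derive (fun t => F (fst w, t)) (snd w) /\
  continuous (dx F) w /\ continuous (dy F) w.

Lemma C1_on_D_harmonic (h : C -> R) : harmonic_on_D h ->
  C1_on_D h /\ C1_on_D (dx h) /\ C1_on_D (dy h).
Proof.
  intros H. unfold C1_on_D.
  split; [|split]; intros w Hw; destruct (H w Hw) as [C _]; unfold C2_at in C; tauto.
Qed.

Lemma C1_on_D_increment_x (F : C -> R) (x y : R) : C1_on_D F -> inD (x, y) ->
  forall e, 0 < e -> exists d, 0 < d /\ forall u v, Rabs (u - x) < d -> Rabs (v - y) < d ->
    Rabs (F (u, v) - F (x, v) - dx F (x, y) * (u - x)) <= e * Rabs (u - x).
Proof.
  intros HF Hw e He.
  destruct (locally_inD _ Hw) as [d0 Hd0].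
  destruct (HF (x, y) Hw) as [_ [_ [Cx _]]].
  destruct (proj1 (continuous_C_ball _ _) Cx e He) as [d1 [Hd1 H1]].
  exists (Rmin d0 d1). split; [apply Rmin_pos; [apply cond_pos | lra]|].
  intros u v Hu Hv.
  assert (Le0 := Rmin_l d0 d1). assert (Le1 := Rmin_r d0 d1).
  replace (F (u, v) - F (x, v) - dx F (x, y) * (u - x))
    with (F (u, v) - dx F (x, y) * u - (F (x, v) - dx F (x, y) * x)) by ring.
  apply (bounded_variation (fun t => F (t, v) - dx F (x, y) * t)
           (fun t => dx F (t, v) - dx F (x, y))).
  intros t Ht. split.
  - apply is_derive_Rminus.
    + assert (Hin : inD (t, v)).
      { apply Hd0. split; [change (Rabs (t - x) < d0) | change (Rabs (v - y) < d0)]; lra. }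
      exact (Derive_correct _ _ (proj1 (HF (t, v) Hin))).
    + eapply is_derive_eq_rhs; [apply is_derive_Rmult; [apply is_derive_Rconst | apply is_derive_Rid]|].
      simpl. ring.
  - left. apply H1.
    split; [change (Rabs (t - x) < d1) | change (Rabs (v - y) < d1)]; lra.
Qed.

Lemma differentiable_pt_lim_C1_on_D (F : C -> R) (w : C) : C1_on_D F -> inD w ->
  differentiable_pt_lim (fun a b => F (a, b)) (fst w) (snd w) (dx F w) (dy F w).
Proof.
  intros HF Hw eps. destruct w as [x y]. simpl.
  assert (He : 0 < eps / 2) by (destruct eps; simpl; lra).
  destruct (C1_on_D_increment_x F x y HF Hw _ He) as [d1 [Hd1 Hx]].
  destruct (HF (x, y) Hw) as [_ [Ey _]].
  assert (Dy : is_derive (fun t => F (x, t)) y (dy F (x, y))) by exact (Derive_correct _ _ Ey).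
  apply is_derive_Reals in Dy. destruct (Dy _ He) as [d2 Hd2].
  assert (Hd : 0 < Rmin d1 d2) by (apply Rmin_pos; [lra | apply cond_pos]).
  assert (Le1 := Rmin_l d1 d2). assert (Le2 := Rmin_r d1 d2).
  exists (mkposreal _ Hd). intros u v Hu Hv. simpl in Hu, Hv.
  specialize (Hx u v ltac:(lra) ltac:(lra)).
  assert (Hy : Rabs (F (x, v) - F (x, y) - dy F (x, y) * (v - y)) <= eps/2 * Rabs (v - y)).
  { destruct (Req_dec v y) as [->|Hvy].
    - rewrite !Rminus_eq_0, Rmult_0_r, Rminus_0_r, Rabs_R0. lra.
    - assert (Hh : v - y <> 0) by lra.
      specialize (Hd2 (v - y) Hh ltac:(lra)). cbv beta in Hd2. replace (y + (v - y)) with v in Hd2 by ring.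
      replace (F (x, v) - F (x, y) - dy F (x, y) * (v - y)) with
        (((F (x, v) - F (x, y)) / (v - y) - dy F (x, y)) * (v - y)) by (field; exact Hh).
      rewrite Rabs_mult. apply Rmult_le_compat_r; [apply Rabs_pos | left; exact Hd2]. }
  replace (F (u, v) - F (x, y) - (dx F (x, y) * (u - x) + dy F (x, y) * (v - y))) with
    ((F (u, v) - F (x, v) - dx F (x, y) * (u - x)) + (F (x, v) - F (x, y) - dy F (x, y) * (v - y)))
    by ring.
  eapply Rle_trans; [apply Rabs_triang|].
  assert (Rabs (u - x) <= Rmax (Rabs (u - x)) (Rabs (v - y))) by apply Rmax_l.
  assert (Rabs (v - y) <= Rmax (Rabs (u - x)) (Rabs (v - y))) by apply Rmax_r.
  destruct eps as [e He']; simpl in *. nra.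
Qed.

Lemma is_derive_comp_Cpow_x (F : C -> R) (N : nat) (z : C) : C1_on_D F -> (1 <= N)%nat -> inD z ->
  is_derive (fun t => F (Cpow (t, snd z) N)) (fst z)
     (dx F (Cpow z N) * dpow_re z N + dy F (Cpow z N) * dpow_im z N).
Proof.
  intros HF HN Hz.
  assert (Dif := differentiable_pt_lim_C1_on_D F (Cpow z N) HF (inD_Cpow z N Hz HN)).
  destruct z as [x y]. simpl.
  apply (is_derive_ext (fun t => (fun a b => F (a, b)) (fst (Cpow (t, y) N)) (snd (Cpow (t, y) N)))).
  { intros t. simpl. rewrite <- surjective_pairing. reflexivity. }
  destruct (is_derive_Cpow_x x y N) as [P1 P2].
  apply is_derive_Reals in P1, P2. apply is_derive_Reals.
  apply (derivable_pt_lim_comp_2d (fun a b => F (a, b))); auto.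
Qed.

Lemma is_derive_comp_Cpow_y (F : C -> R) (N : nat) (z : C) : C1_on_D F -> (1 <= N)%nat -> inD z ->
  is_derive (fun t => F (Cpow (fst z, t) N)) (snd z)
     (- dx F (Cpow z N) * dpow_im z N + dy F (Cpow z N) * dpow_re z N).
Proof.
  intros HF HN Hz.
  assert (Dif := differentiable_pt_lim_C1_on_D F (Cpow z N) HF (inD_Cpow z N Hz HN)).
  destruct z as [x y]. simpl.
  apply (is_derive_ext (fun t => (fun a b => F (a, b)) (fst (Cpow (x, t) N)) (snd (Cpow (x, t) N)))).
  { intros t. simpl. rewrite <- surjective_pairing. reflexivity. }
  destruct (is_derive_Cpow_y x y N) as [P1 P2].
  apply is_derive_Reals in P1, P2. apply is_derive_Reals.
  replace (- dx F (Cpow (x, y) N) * dpow_im (x, y) N + dy F (Cpow (x, y) N) * dpow_re (x, y) N) with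
    (dx F (Cpow (x, y) N) * (- dpow_im (x, y) N) + dy F (Cpow (x, y) N) * dpow_re (x, y) N) by ring.
  apply (derivable_pt_lim_comp_2d (fun a b => F (a, b))); auto.
Qed.

(** * The summands [c h(z^N)] and their derivatives *)

(* [is_derive] states values in [AbsRing.sort R_AbsRing], which [ring] does not see as [R]. *)
Ltac Rring := cbv beta; try change (AbsRing.sort R_AbsRing) with R in *; ring.

Lemma is_derive_dpow_re_x x y N :
  is_derive (fun t => dpow_re (t, y) N) x (INR N * dpow_re (x, y) (N - 1)).
Proof.
  unfold dpow_re. eapply is_derive_eq_rhs.
  - apply is_derive_Rmult; [apply is_derive_Rconst | apply (proj1 (is_derive_Cpow_x x y (N - 1)))].
  - unfold dpow_re. Rring.
Qed.

Lemma is_derive_dpow_im_x x y N :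
  is_derive (fun t => dpow_im (t, y) N) x (INR N * dpow_im (x, y) (N - 1)).
Proof.
  unfold dpow_im. eapply is_derive_eq_rhs.
  - apply is_derive_Rmult; [apply is_derive_Rconst | apply (proj2 (is_derive_Cpow_x x y (N - 1)))].
  - unfold dpow_im. Rring.
Qed.

Lemma is_derive_dpow_re_y x y N :
  is_derive (fun t => dpow_re (x, t) N) y (- (INR N * dpow_im (x, y) (N - 1))).
Proof.
  unfold dpow_re. eapply is_derive_eq_rhs.
  - apply is_derive_Rmult; [apply is_derive_Rconst | apply (proj1 (is_derive_Cpow_y x y (N - 1)))].
  - unfold dpow_im. Rring.
Qed.

Lemma is_derive_dpow_im_y x y N :
  is_derive (fun t => dpow_im (x, t) N) y (INR N * dpow_re (x, y) (N - 1)).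
Proof.
  unfold dpow_im. eapply is_derive_eq_rhs.
  - apply is_derive_Rmult; [apply is_derive_Rconst | apply (proj2 (is_derive_Cpow_y x y (N - 1)))].
  - unfold dpow_re. Rring.
Qed.

Section CompPow.

Variables (h : C -> R) (c : R) (N : nat).

Definition comp_pow (z : C) : R := c * h (Cpow z N).

Definition comp_pow_x (z : C) : R :=
  c * (dx h (Cpow z N) * dpow_re z N + dy h (Cpow z N) * dpow_im z N).

Definition comp_pow_y (z : C) : R :=
  c * (- dx h (Cpow z N) * dpow_im z N + dy h (Cpow z N) * dpow_re z N).

Definition comp_pow_xx (z : C) : R :=
  c * ((dx (dx h) (Cpow z N) * dpow_re z N + dy (dx h) (Cpow z N) * dpow_im z N) * dpow_re z N
       + dx h (Cpow z N) * (INR N * dpow_re z (N - 1))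
       + (dx (dy h) (Cpow z N) * dpow_re z N + dy (dy h) (Cpow z N) * dpow_im z N) * dpow_im z N
       + dy h (Cpow z N) * (INR N * dpow_im z (N - 1))).

Definition comp_pow_xy (z : C) : R :=
  c * ((- dx (dx h) (Cpow z N) * dpow_im z N + dy (dx h) (Cpow z N) * dpow_re z N) * dpow_re z N
       + dx h (Cpow z N) * (- (INR N * dpow_im z (N - 1)))
       + (- dx (dy h) (Cpow z N) * dpow_im z N + dy (dy h) (Cpow z N) * dpow_re z N) * dpow_im z N
       + dy h (Cpow z N) * (INR N * dpow_re z (N - 1))).

Definition comp_pow_yx (z : C) : R :=
  c * (- (dx (dx h) (Cpow z N) * dpow_re z N + dy (dx h) (Cpow z N) * dpow_im z N) * dpow_im z N
       - dx h (Cpow z N) * (INR N * dpow_im z (N - 1))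
       + (dx (dy h) (Cpow z N) * dpow_re z N + dy (dy h) (Cpow z N) * dpow_im z N) * dpow_re z N
       + dy h (Cpow z N) * (INR N * dpow_re z (N - 1))).

Definition comp_pow_yy (z : C) : R :=
  c * (- (- dx (dx h) (Cpow z N) * dpow_im z N + dy (dx h) (Cpow z N) * dpow_re z N) * dpow_im z N
       - dx h (Cpow z N) * (INR N * dpow_re z (N - 1))
       + (- dx (dy h) (Cpow z N) * dpow_im z N + dy (dy h) (Cpow z N) * dpow_re z N) * dpow_re z N
       + dy h (Cpow z N) * (- (INR N * dpow_im z (N - 1)))).

Hypothesis h_harm : harmonic_on_D h.
Hypothesis N_pos : (1 <= N)%nat.

Let h_C1 := proj1 (C1_on_D_harmonic h h_harm).
Let hx_C1 := proj1 (proj2 (C1_on_D_harmonic h h_harm)).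
Let hy_C1 := proj2 (proj2 (C1_on_D_harmonic h h_harm)).

Lemma is_derive_comp_pow_x x y : inD (x, y) ->
  is_derive (fun t => comp_pow (t, y)) x (comp_pow_x (x, y)).
Proof.
  intros Hz. unfold comp_pow, comp_pow_x. eapply is_derive_eq_rhs.
  - apply is_derive_Rmult; [apply is_derive_Rconst | apply (is_derive_comp_Cpow_x h N (x, y) h_C1 N_pos Hz)].
  - Rring.
Qed.

Lemma is_derive_comp_pow_y x y : inD (x, y) ->
  is_derive (fun t => comp_pow (x, t)) y (comp_pow_y (x, y)).
Proof.
  intros Hz. unfold comp_pow, comp_pow_y. eapply is_derive_eq_rhs.
  - apply is_derive_Rmult; [apply is_derive_Rconst | apply (is_derive_comp_Cpow_y h N (x, y) h_C1 N_pos Hz)].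
  - Rring.
Qed.

Lemma is_derive_comp_pow_xx x y : inD (x, y) ->
  is_derive (fun t => comp_pow_x (t, y)) x (comp_pow_xx (x, y)).
Proof.
  intros Hz. unfold comp_pow_x, comp_pow_xx. eapply is_derive_eq_rhs.
  - apply is_derive_Rmult; [apply is_derive_Rconst|].
    apply is_derive_Rplus; apply is_derive_Rmult.
    + apply (is_derive_comp_Cpow_x (dx h) N (x, y) hx_C1 N_pos Hz).
    + apply is_derive_dpow_re_x.
    + apply (is_derive_comp_Cpow_x (dy h) N (x, y) hy_C1 N_pos Hz).
    + apply is_derive_dpow_im_x.
  - simpl fst; simpl snd. Rring.
Qed.

Lemma is_derive_comp_pow_xy x y : inD (x, y) ->
  is_derive (fun t => comp_pow_x (x, t)) y (comp_pow_xy (x, y)).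
Proof.
  intros Hz. unfold comp_pow_x, comp_pow_xy. eapply is_derive_eq_rhs.
  - apply is_derive_Rmult; [apply is_derive_Rconst|].
    apply is_derive_Rplus; apply is_derive_Rmult.
    + apply (is_derive_comp_Cpow_y (dx h) N (x, y) hx_C1 N_pos Hz).
    + apply is_derive_dpow_re_y.
    + apply (is_derive_comp_Cpow_y (dy h) N (x, y) hy_C1 N_pos Hz).
    + apply is_derive_dpow_im_y.
  - simpl fst; simpl snd. Rring.
Qed.

Lemma is_derive_comp_pow_yx x y : inD (x, y) ->
  is_derive (fun t => comp_pow_y (t, y)) x (comp_pow_yx (x, y)).
Proof.
  intros Hz. unfold comp_pow_y, comp_pow_yx. eapply is_derive_eq_rhs.
  - apply is_derive_Rmult; [apply is_derive_Rconst|].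
    apply is_derive_Rplus; apply is_derive_Rmult.
    + apply (is_derive_ext (fun t => (-1) * dx h (Cpow (t, y) N))); [intro t; lra|].
      apply is_derive_scal, (is_derive_comp_Cpow_x (dx h) N (x, y) hx_C1 N_pos Hz).
    + apply is_derive_dpow_im_x.
    + apply (is_derive_comp_Cpow_x (dy h) N (x, y) hy_C1 N_pos Hz).
    + apply is_derive_dpow_re_x.
  - simpl fst; simpl snd. Rring.
Qed.

Lemma is_derive_comp_pow_yy x y : inD (x, y) ->
  is_derive (fun t => comp_pow_y (x, t)) y (comp_pow_yy (x, y)).
Proof.
  intros Hz. unfold comp_pow_y, comp_pow_yy. eapply is_derive_eq_rhs.
  - apply is_derive_Rmult; [apply is_derive_Rconst|].
    apply is_derive_Rplus; apply is_derive_Rmult.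
    + apply (is_derive_ext (fun t => (-1) * dx h (Cpow (x, t) N))); [intro t; lra|].
      apply is_derive_scal, (is_derive_comp_Cpow_y (dx h) N (x, y) hx_C1 N_pos Hz).
    + apply is_derive_dpow_im_y.
    + apply (is_derive_comp_Cpow_y (dy h) N (x, y) hy_C1 N_pos Hz).
    + apply is_derive_dpow_re_y.
  - simpl fst; simpl snd. Rring.
Qed.

Lemma comp_pow_laplacian z : inD z -> comp_pow_xx z + comp_pow_yy z = 0.
Proof.
  intros Hz. destruct (h_harm (Cpow z N) (inD_Cpow z N Hz N_pos)) as [_ L].
  unfold comp_pow_xx, comp_pow_yy.
  replace (dy (dy h) (Cpow z N)) with (- dx (dx h) (Cpow z N)) by lra. ring.
Qed.

Ltac continuity_tac :=
  repeat match goal with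
  | |- continuous (fun _ => ?c) _ => apply continuous_const
  | |- continuous (fun w => @?f w + @?g w) _ => apply (continuous_plus (V:=R_NormedModule) f g)
  | |- continuous (fun w => @?f w - @?g w) _ => apply (continuous_minus (V:=R_NormedModule) f g)
  | |- continuous (fun w => @?f w * @?g w) _ => apply (continuous_mult (K:=R_AbsRing) f g)
  | |- continuous (fun w => - @?f w) _ => apply (continuous_opp (V:=R_NormedModule) f)
  | |- continuous (fun w => fst (Cpow w ?n)) _ => apply (proj1 (continuous_Cpow n _))
  | |- continuous (fun w => snd (Cpow w ?n)) _ => apply (proj2 (continuous_Cpow n _))
  | |- continuous (fun w => ?F (Cpow w ?n)) _ => apply (continuous_comp_Cpow F n); assumption
  end.

Lemma continuous_comp_pow_all z : inD z ->
  continuous comp_pow z /\ continuous comp_pow_x z /\ continuous comp_pow_y z /\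
  continuous comp_pow_xx z /\ continuous comp_pow_xy z /\
  continuous comp_pow_yx z /\ continuous comp_pow_yy z.
Proof.
  intros Hz.
  destruct (h_harm (Cpow z N) (inD_Cpow z N Hz N_pos)) as [Hc _].
  unfold C2_at in Hc. destruct Hc as (_ & _ & _ & _ & _ & _ & c0 & c1 & c2 & c3 & c4 & c5 & c6).
  unfold comp_pow, comp_pow_x, comp_pow_y, comp_pow_xx, comp_pow_xy, comp_pow_yx, comp_pow_yy,
    dpow_re, dpow_im.
  repeat split; continuity_tac.
Qed.

End CompPow.

Lemma pow_le_pow_le1 (r : R) (m n : nat) : 0 <= r <= 1 -> (m <= n)%nat -> r ^ n <= r ^ m.
Proof.
  intros Hr Hmn. replace n with (m + (n - m))%nat by lia. rewrite pow_add.
  assert (0 <= r ^ m) by (apply pow_le; lra).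
  assert (r ^ (n - m) <= 1) by (rewrite <- (pow1 (n - m)); apply pow_incr; lra).
  assert (0 <= r ^ (n - m)) by (apply pow_le; lra). nra.
Qed.

Lemma Cpow_components_le (z : C) (m : nat) (rho : R) : Cmod z <= rho ->
  Rabs (fst (Cpow z m)) <= rho ^ m /\ Rabs (snd (Cpow z m)) <= rho ^ m.
Proof.
  intros H. assert (Hp : Cmod (Cpow z m) <= rho ^ m).
  { rewrite Cmod_pow. apply pow_incr. split; auto. apply Cmod_ge_0. }
  split; eapply Rle_trans; [apply re_le_Cmod | exact Hp | apply snd_le_Cmod | exact Hp].
Qed.

(* Dominates [|z^N|], the first derivative [N z^(N-1)] and the second derivative
   [N (N-1) z^(N-2)] of [z^N] on the disc [|z| <= rho]. *)
Definition dpow_majorant (rho : R) (N : nat) : R := INR N ^ 2 * rho ^ (N - 2).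

Lemma dpow_majorant_ge0 (rho : R) (N : nat) : 0 <= rho -> 0 <= dpow_majorant rho N.
Proof. intros. unfold dpow_majorant. apply Rmult_le_pos; [apply pow2_ge_0 | apply pow_le; lra]. Qed.

Lemma pow_le_dpow_majorant (rho : R) (N : nat) : 0 <= rho <= 1 -> (1 <= N)%nat ->
  rho ^ N <= dpow_majorant rho N.
Proof.
  intros Hr HN. unfold dpow_majorant.
  assert (rho ^ N <= rho ^ (N - 2)) by (apply pow_le_pow_le1; auto; lia).
  assert (1 <= INR N) by (apply (le_INR 1); lia).
  assert (0 <= rho ^ (N - 2)) by (apply pow_le; lra).
  assert (1 <= INR N ^ 2) by (simpl; nra).
  nra.
Qed.

Lemma dpow_le_majorant (z : C) (N : nat) (rho : R) : (1 <= N)%nat -> 0 <= rho <= 1 -> Cmod z <= rho ->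
  Rabs (dpow_re z N) <= dpow_majorant rho N /\ Rabs (dpow_im z N) <= dpow_majorant rho N /\
  Rabs (INR N * dpow_re z (N - 1)) <= dpow_majorant rho N /\
  Rabs (INR N * dpow_im z (N - 1)) <= dpow_majorant rho N.
Proof.
  intros HN Hr Hz. unfold dpow_re, dpow_im, dpow_majorant.
  assert (HN1 : 1 <= INR N) by (apply (le_INR 1); lia).
  assert (HNm : INR (N - 1) <= INR N) by (apply le_INR; lia).
  assert (HNm0 := pos_INR (N - 1)).
  assert (P1 : rho ^ (N - 1) <= rho ^ (N - 2)) by (apply pow_le_pow_le1; auto; lia).
  assert (P2 : 0 <= rho ^ (N - 2)) by (apply pow_le; lra).
  destruct (Cpow_components_le z (N - 1) rho Hz) as [F1 F2].
  destruct (Cpow_components_le z (N - 1 - 1) rho Hz) as [F3 F4].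
  replace (N - 1 - 1)%nat with (N - 2)%nat in * by lia.
  rewrite !Rabs_mult, (Rabs_pos_eq (INR N)), (Rabs_pos_eq (INR (N - 1))) by lra.
  assert (A0 := Rabs_pos (fst (Cpow z (N - 1)))). assert (A1 := Rabs_pos (snd (Cpow z (N - 1)))).
  assert (A2 := Rabs_pos (fst (Cpow z (N - 2)))). assert (A3 := Rabs_pos (snd (Cpow z (N - 2)))).
  assert (K : INR N * rho ^ (N - 2) <= INR N ^ 2 * rho ^ (N - 2)).
  { assert (0 <= (INR N - 1) * INR N * rho ^ (N - 2)) by (apply Rmult_le_pos; nra). simpl. nra. }
  repeat split.
  - assert (INR N * Rabs (fst (Cpow z (N - 1))) <= INR N * rho ^ (N - 2)) by nra. lra.
  - assert (INR N * Rabs (snd (Cpow z (N - 1))) <= INR N * rho ^ (N - 2)) by nra. lra.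
  - assert (INR (N - 1) * Rabs (fst (Cpow z (N - 2))) <= INR N * rho ^ (N - 2)) by nra.
    simpl. nra.
  - assert (INR (N - 1) * Rabs (snd (Cpow z (N - 2))) <= INR N * rho ^ (N - 2)) by nra.
    simpl. nra.
Qed.

Lemma Rabs_plus_le (x y a b : R) : Rabs x <= a -> Rabs y <= b -> Rabs (x + y) <= a + b.
Proof. intros. eapply Rle_trans; [apply Rabs_triang | lra]. Qed.

Lemma Rabs_minus_le (x y a b : R) : Rabs x <= a -> Rabs y <= b -> Rabs (x - y) <= a + b.
Proof. intros. eapply Rle_trans; [apply Rabs_triang | rewrite Rabs_Ropp; lra]. Qed.

Lemma Rabs_mult_le (x y a b : R) : Rabs x <= a -> Rabs y <= b -> Rabs (x * y) <= a * b.
Proof. intros. rewrite Rabs_mult. apply Rmult_le_compat; auto; apply Rabs_pos. Qed.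

Lemma Rabs_opp_le (x a : R) : Rabs x <= a -> Rabs (- x) <= a.
Proof. rewrite Rabs_Ropp. auto. Qed.

Ltac Rabs_bound :=
  first [ eassumption
        | eapply Rabs_plus_le; [Rabs_bound | Rabs_bound]
        | eapply Rabs_minus_le; [Rabs_bound | Rabs_bound]
        | eapply Rabs_mult_le; [Rabs_bound | Rabs_bound]
        | eapply Rabs_opp_le; Rabs_bound
        | apply Rle_refl ].

Lemma comp_pow_all_le h B E c N z rho :
  (1 <= N)%nat -> 0 <= rho <= 1 -> Cmod z <= rho -> dpow_majorant rho N <= 1 -> 0 <= E -> 0 <= B ->
  (forall w, inD w -> Rabs (h w) <= B * Cmod w) -> inD (Cpow z N) ->
  Rabs (dx h (Cpow z N)) <= E -> Rabs (dy h (Cpow z N)) <= E ->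
  Rabs (dx (dx h) (Cpow z N)) <= E -> Rabs (dy (dx h) (Cpow z N)) <= E ->
  Rabs (dx (dy h) (Cpow z N)) <= E -> Rabs (dy (dy h) (Cpow z N)) <= E ->
  let M := Rabs c * (B + 6 * E) * dpow_majorant rho N in
  Rabs (comp_pow h c N z) <= M /\ Rabs (comp_pow_x h c N z) <= M /\
  Rabs (comp_pow_y h c N z) <= M /\ Rabs (comp_pow_xx h c N z) <= M /\
  Rabs (comp_pow_xy h c N z) <= M /\ Rabs (comp_pow_yx h c N z) <= M /\
  Rabs (comp_pow_yy h c N z) <= M.
Proof.
  intros HN Hr Hz HW HE HB Hh Hp e1 e2 e3 e4 e5 e6 M.
  destruct (dpow_le_majorant z N rho HN Hr Hz) as [q1 [q2 [q3 q4]]].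
  assert (W0 : 0 <= dpow_majorant rho N) by (apply dpow_majorant_ge0; lra).
  assert (C0 := Rabs_pos c).
  assert (H0 : Rabs (h (Cpow z N)) <= B * dpow_majorant rho N).
  { eapply Rle_trans; [apply Hh; auto|]. apply Rmult_le_compat_l; auto.
    rewrite Cmod_pow. eapply Rle_trans; [|apply pow_le_dpow_majorant; auto].
    apply pow_incr. split; [apply Cmod_ge_0 | exact Hz]. }
  set (W := dpow_majorant rho N) in *.
  unfold M, comp_pow, comp_pow_x, comp_pow_y, comp_pow_xx, comp_pow_xy, comp_pow_yx, comp_pow_yy.
  assert (WW : W * W <= W) by nra.
  assert (T1 : Rabs c * E * (W * W) <= Rabs c * E * W) by (apply Rmult_le_compat_l; nra).
  assert (T2 : 0 <= Rabs c * W * B) by (apply Rmult_le_pos; [apply Rmult_le_pos|]; auto).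
  assert (T3 : 0 <= Rabs c * E * W) by (apply Rmult_le_pos; [apply Rmult_le_pos|]; auto).
  repeat split; (eapply Rle_trans; [Rabs_bound | lra]).
Qed.

Lemma derivs_bounded_near_0 (h : C -> R) : harmonic_on_D h ->
  exists r0 E, 0 < r0 /\ 0 <= E /\ forall w, Cmod w < r0 ->
    Rabs (dx h w) <= E /\ Rabs (dy h w) <= E /\
    Rabs (dx (dx h) w) <= E /\ Rabs (dy (dx h) w) <= E /\
    Rabs (dx (dy h) w) <= E /\ Rabs (dy (dy h) w) <= E.
Proof.
  intros Hh.
  assert (H0 : inD (0, 0)) by (unfold inD; change (0, 0) with (RtoC 0); rewrite Cmod_0; lra).
  destruct (Hh (0, 0) H0) as [Hc _].
  unfold C2_at in Hc. destruct Hc as (_ & _ & _ & _ & _ & _ & _ & c1 & c2 & c3 & c4 & c5 & c6).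
  assert (Hloc : forall F, continuous F (0, 0) ->
            locally (0, 0) (fun w => Rabs (F w) <= Rabs (F (0, 0)) + 1)).
  { intros F HF. destruct (proj1 (continuous_C_ball F _) HF 1 ltac:(lra)) as [r [Hr HFr]].
    exists (mkposreal r Hr). intros w Hw. specialize (HFr w Hw).
    replace (F w) with ((F w - F (0, 0)) + F (0, 0)) by ring.
    eapply Rle_trans; [apply Rabs_triang | lra]. }
  destruct (filter_and _ _ (Hloc _ c1) (filter_and _ _ (Hloc _ c2) (filter_and _ _ (Hloc _ c3)
              (filter_and _ _ (Hloc _ c4) (filter_and _ _ (Hloc _ c5) (Hloc _ c6))))))
    as [r Hr].
  exists r, (Rabs (dx h (0, 0)) + Rabs (dy h (0, 0)) + Rabs (dx (dx h) (0, 0))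
             + Rabs (dy (dx h) (0, 0)) + Rabs (dx (dy h) (0, 0)) + Rabs (dy (dy h) (0, 0)) + 1).
  assert (P1 := Rabs_pos (dx h (0, 0))). assert (P2 := Rabs_pos (dy h (0, 0))).
  assert (P3 := Rabs_pos (dx (dx h) (0, 0))). assert (P4 := Rabs_pos (dy (dx h) (0, 0))).
  assert (P5 := Rabs_pos (dx (dy h) (0, 0))). assert (P6 := Rabs_pos (dy (dy h) (0, 0))).
  split; [apply cond_pos|]. split; [lra|].
  intros w Hw.
  assert (Hb : ball (0, 0) r w).
  { split; [change (Rabs (fst w - 0) < r) | change (Rabs (snd w - 0) < r)]; rewrite Rminus_0_r;
      eapply Rle_lt_trans; [apply re_le_Cmod | exact Hw | apply snd_le_Cmod | exact Hw]. }
  destruct (Hr w Hb) as (B1 & B2 & B3 & B4 & B5 & B6).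
  repeat split; lra.
Qed.

Lemma comp_pow_all_le_near h B (c : nat -> R) (N : nat -> nat) :
  harmonic_on_D h -> 0 <= B -> (forall w, inD w -> Rabs (h w) <= B * Cmod w) ->
  (forall k, (1 <= N k)%nat) ->
  (forall rho, 0 <= rho < 1 -> is_lim_seq (fun k => dpow_majorant rho (N k)) 0) ->
  forall z0, inD z0 -> exists d rho E K, 0 < d /\ 0 <= rho < 1 /\ 0 <= E /\
    (forall z, ball z0 d z -> inD z) /\
    forall k z, (K <= k)%nat -> ball z0 d z ->
      let M := Rabs (c k) * (B + 6 * E) * dpow_majorant rho (N k) in
      Rabs (comp_pow h (c k) (N k) z) <= M /\ Rabs (comp_pow_x h (c k) (N k) z) <= M /\
      Rabs (comp_pow_y h (c k) (N k) z) <= M /\ Rabs (comp_pow_xx h (c k) (N k) z) <= M /\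
      Rabs (comp_pow_xy h (c k) (N k) z) <= M /\ Rabs (comp_pow_yx h (c k) (N k) z) <= M /\
      Rabs (comp_pow_yy h (c k) (N k) z) <= M.
Proof.
  intros Hh HB Hg HN HW z0 Hz0.
  destruct (derivs_bounded_near_0 h Hh) as [r0 [E [Hr0 [HE HEb]]]].
  set (rho := (1 + Cmod z0) / 2).
  assert (Hc0 := Cmod_ge_0 z0). unfold inD in Hz0.
  assert (Hrho : 0 <= rho < 1) by (unfold rho; lra).
  assert (Hsmall := proj2 (is_lim_seq_spec _ _) (HW rho Hrho)).
  destruct (Hsmall (mkposreal (Rmin r0 1) ltac:(apply Rmin_pos; lra))) as [K HK].
  exists ((1 - Cmod z0) / 4), rho, E, K.
  split; [lra|]. split; [exact Hrho|]. split; [exact HE|].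
  split; [intros z; apply inD_of_ball, Hz0|].
  intros k z Hk Hz.
  assert (HzD := inD_of_ball z0 z Hz0 Hz).
  assert (Hzr := Cmod_le_of_ball z0 z Hz).
  (* the tail of [N k] is so large that [z^(N k)] lies where the derivatives of [h] are [<= E] *)
  assert (HWk : dpow_majorant rho (N k) < Rmin r0 1).
  { specialize (HK k Hk). simpl in HK. rewrite Rminus_0_r, Rabs_pos_eq in HK
      by (apply dpow_majorant_ge0; lra). exact HK. }
  assert (Hr0' := Rmin_l r0 1). assert (H1' := Rmin_r r0 1).
  assert (Hp : Cmod (Cpow z (N k)) < r0).
  { rewrite Cmod_pow.
    assert (Cmod z ^ N k <= rho ^ N k) by (apply pow_incr; split; [apply Cmod_ge_0 | exact Hzr]).
    assert (rho ^ N k <= dpow_majorant rho (N k)) by (apply pow_le_dpow_majorant; auto; lra).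
    lra. }
  destruct (HEb _ Hp) as (e1 & e2 & e3 & e4 & e5 & e6).
  apply (comp_pow_all_le h B E (c k) (N k) z rho); auto; try lra.
  apply inD_Cpow; auto.
Qed.

(** * Harmonicity of the sum *)

Definition Series_fun (F : nat -> C -> R) (z : C) : R := Series (fun k => F k z).

Definition loc_dominated (F : nat -> C -> R) : Prop :=
  forall z, inD z -> exists d K M, 0 < d /\ ex_series M /\ (forall k, 0 <= M k) /\
    (forall w, ball z d w -> inD w) /\
    forall k w, (K <= k)%nat -> ball z d w -> Rabs (F k w) <= M k.

Lemma loc_dominated_pair (Fa Fb : nat -> C -> R) : loc_dominated Fa -> loc_dominated Fb ->
  forall z, inD z -> exists d K M, 0 < d /\ ex_series M /\
    (forall w, ball z d w -> inD w) /\
    forall k w, (K <= k)%nat -> ball z d w -> Rabs (Fa k w) <= M k /\ Rabs (Fb k w) <= M k.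
Proof.
  intros Ha Hb z Hz.
  destruct (Ha z Hz) as (d1 & K1 & M1 & Hd1 & E1 & P1 & D1 & B1).
  destruct (Hb z Hz) as (d2 & K2 & M2 & Hd2 & E2 & P2 & D2 & B2).
  exists (Rmin d1 d2), (max K1 K2), (fun k => M1 k + M2 k).
  split; [apply Rmin_pos; auto|]. split; [apply (ex_series_plus M1 M2); auto|].
  split; [intros w Hw; apply D1; eapply ball_le; [apply Rmin_l | exact Hw]|].
  intros k w Hk Hw.
  specialize (B1 k w ltac:(lia) (ball_le _ _ _ (Rmin_l _ _) _ Hw)).
  specialize (B2 k w ltac:(lia) (ball_le _ _ _ (Rmin_r _ _) _ Hw)).
  specialize (P1 k). specialize (P2 k). split; lra.
Qed.

Lemma ex_series_loc_dominated (F : nat -> C -> R) : loc_dominated F ->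
  forall z, inD z -> ex_series (fun k => Rabs (F k z)).
Proof.
  intros H z Hz. destruct (H z Hz) as (d & K & M & Hd & E & P & D & B).
  apply (ex_series_Rabs_le_eventually _ M K); auto.
  intros k Hk. apply B; auto. apply (ball_center z (mkposreal d Hd)).
Qed.

Lemma continuous_Series_fun (F : nat -> C -> R) : loc_dominated F ->
  (forall k z, inD z -> continuous (F k) z) ->
  forall z, inD z -> continuous (Series_fun F) z.
Proof.
  intros H Hc z Hz. destruct (H z Hz) as (d & K & M & Hd & E & P & D & B).
  apply (continuous_Series F z d M K); auto.
Qed.

Lemma is_derive_Series_fun_x (Fa Fb : nat -> C -> R) : loc_dominated Fa -> loc_dominated Fb ->
  (forall k z, inD z -> is_derive (fun t => Fa k (t, snd z)) (fst z) (Fb k z)) ->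
  forall z, inD z -> is_derive (fun t => Series_fun Fa (t, snd z)) (fst z) (Series_fun Fb z).
Proof.
  intros Ha Hb Hd z Hz.
  destruct (loc_dominated_pair Fa Fb Ha Hb z Hz) as (d & K & M & Hd0 & E & D & B).
  destruct z as [x y]. simpl. unfold Series_fun.
  assert (Bt : forall t, Rabs (t - x) < d -> ball (x, y) d (t, y)).
  { intros t Ht. split; [exact Ht | apply (ball_center y (mkposreal d Hd0))]. }
  apply (is_derive_Series (fun k t => Fa k (t, y)) (fun k t => Fb k (t, y)) x d M K); auto.
  - intros k t Ht. apply (Hd k (t, y)). apply D. auto.
  - intros k t Hk Ht. apply B; auto.
  - intros t Ht. apply (ex_series_le_eventually _ M K); auto. intros k Hk. apply B; auto.
Qed.

Lemma is_derive_Series_fun_y (Fa Fb : nat -> C -> R) : loc_dominated Fa -> loc_dominated Fb ->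
  (forall k z, inD z -> is_derive (fun t => Fa k (fst z, t)) (snd z) (Fb k z)) ->
  forall z, inD z -> is_derive (fun t => Series_fun Fa (fst z, t)) (snd z) (Series_fun Fb z).
Proof.
  intros Ha Hb Hd z Hz.
  destruct (loc_dominated_pair Fa Fb Ha Hb z Hz) as (d & K & M & Hd0 & E & D & B).
  destruct z as [x y]. simpl. unfold Series_fun.
  assert (Bt : forall t, Rabs (t - y) < d -> ball (x, y) d (x, t)).
  { intros t Ht. split; [apply (ball_center x (mkposreal d Hd0)) | exact Ht]. }
  apply (is_derive_Series (fun k t => Fa k (x, t)) (fun k t => Fb k (x, t)) y d M K); auto.
  - intros k t Ht. apply (Hd k (x, t)). apply D. auto.
  - intros k t Hk Ht. apply B; auto.
  - intros t Ht. apply (ex_series_le_eventually _ M K); auto. intros k Hk. apply B; auto.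
Qed.

Lemma dx_Series_fun (Fa Fb : nat -> C -> R) : loc_dominated Fa -> loc_dominated Fb ->
  (forall k z, inD z -> is_derive (fun t => Fa k (t, snd z)) (fst z) (Fb k z)) ->
  forall z, inD z -> dx (Series_fun Fa) z = Series_fun Fb z.
Proof. intros. apply is_derive_unique, is_derive_Series_fun_x; auto. Qed.

Lemma dy_Series_fun (Fa Fb : nat -> C -> R) : loc_dominated Fa -> loc_dominated Fb ->
  (forall k z, inD z -> is_derive (fun t => Fa k (fst z, t)) (snd z) (Fb k z)) ->
  forall z, inD z -> dy (Series_fun Fa) z = Series_fun Fb z.
Proof. intros. apply is_derive_unique, is_derive_Series_fun_y; auto. Qed.

Lemma is_derive_x_ext_D (U V : C -> R) (z : C) (l : R) : inD z ->
  (forall w, inD w -> U w = V w) ->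
  is_derive (fun t => V (t, snd z)) (fst z) l -> is_derive (fun t => U (t, snd z)) (fst z) l.
Proof.
  intros Hz HUV. destruct z as [x y]. apply is_derive_ext_loc.
  eapply filter_imp; [|apply locally_inD_x, Hz]. intros t Ht. symmetry. auto.
Qed.

Lemma is_derive_y_ext_D (U V : C -> R) (z : C) (l : R) : inD z ->
  (forall w, inD w -> U w = V w) ->
  is_derive (fun t => V (fst z, t)) (snd z) l -> is_derive (fun t => U (fst z, t)) (snd z) l.
Proof.
  intros Hz HUV. destruct z as [x y]. apply is_derive_ext_loc.
  eapply filter_imp; [|apply locally_inD_y, Hz]. intros t Ht. symmetry. auto.
Qed.

Lemma continuous_ext_D (U V : C -> R) (z : C) : inD z ->
  (forall w, inD w -> U w = V w) -> continuous V z -> continuous U z.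
Proof.
  intros Hz HUV. apply continuous_ext_loc.
  eapply filter_imp; [|apply locally_inD, Hz]. intros w Hw. symmetry. auto.
Qed.

Section HarmonicSeries.

Variables F F_x F_y F_xx F_xy F_yx F_yy : nat -> C -> R.

Hypotheses (L : loc_dominated F) (L_x : loc_dominated F_x) (L_y : loc_dominated F_y)
  (L_xx : loc_dominated F_xx) (L_xy : loc_dominated F_xy)
  (L_yx : loc_dominated F_yx) (L_yy : loc_dominated F_yy).

Hypotheses
  (D_x : forall k z, inD z -> is_derive (fun t => F k (t, snd z)) (fst z) (F_x k z))
  (D_y : forall k z, inD z -> is_derive (fun t => F k (fst z, t)) (snd z) (F_y k z))
  (D_xx : forall k z, inD z -> is_derive (fun t => F_x k (t, snd z)) (fst z) (F_xx k z))
  (D_xy : forall k z, inD z -> is_derive (fun t => F_x k (fst z, t)) (snd z) (F_xy k z))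
  (D_yx : forall k z, inD z -> is_derive (fun t => F_y k (t, snd z)) (fst z) (F_yx k z))
  (D_yy : forall k z, inD z -> is_derive (fun t => F_y k (fst z, t)) (snd z) (F_yy k z)).

Hypothesis cont_all : forall k z, inD z ->
  continuous (F k) z /\ continuous (F_x k) z /\ continuous (F_y k) z /\
  continuous (F_xx k) z /\ continuous (F_xy k) z /\
  continuous (F_yx k) z /\ continuous (F_yy k) z.

Hypothesis laplacian : forall k z, inD z -> F_xx k z + F_yy k z = 0.

Lemma dx_sum : forall z, inD z -> dx (Series_fun F) z = Series_fun F_x z.
Proof. apply dx_Series_fun; auto. Qed.

Lemma dy_sum : forall z, inD z -> dy (Series_fun F) z = Series_fun F_y z.
Proof. apply dy_Series_fun; auto. Qed.

Lemma is_derive_dx_sum_x z : inD z ->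
  is_derive (fun t => dx (Series_fun F) (t, snd z)) (fst z) (Series_fun F_xx z).
Proof. intros Hz. apply (is_derive_x_ext_D _ _ _ _ Hz dx_sum), is_derive_Series_fun_x; auto. Qed.

Lemma is_derive_dx_sum_y z : inD z ->
  is_derive (fun t => dx (Series_fun F) (fst z, t)) (snd z) (Series_fun F_xy z).
Proof. intros Hz. apply (is_derive_y_ext_D _ _ _ _ Hz dx_sum), is_derive_Series_fun_y; auto. Qed.

Lemma is_derive_dy_sum_x z : inD z ->
  is_derive (fun t => dy (Series_fun F) (t, snd z)) (fst z) (Series_fun F_yx z).
Proof. intros Hz. apply (is_derive_x_ext_D _ _ _ _ Hz dy_sum), is_derive_Series_fun_x; auto. Qed.

Lemma is_derive_dy_sum_y z : inD z ->
  is_derive (fun t => dy (Series_fun F) (fst z, t)) (snd z) (Series_fun F_yy z).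
Proof. intros Hz. apply (is_derive_y_ext_D _ _ _ _ Hz dy_sum), is_derive_Series_fun_y; auto. Qed.

Lemma continuous_eq_Series_fun (G : nat -> C -> R) (V : C -> R) :
  loc_dominated G -> (forall k z, inD z -> continuous (G k) z) ->
  (forall w, inD w -> V w = Series_fun G w) -> forall z, inD z -> continuous V z.
Proof.
  intros LG HG HV z Hz. apply (continuous_ext_D _ _ _ Hz HV), continuous_Series_fun; auto.
Qed.

Ltac from_cont_all := let k := fresh in let w := fresh in let Hw := fresh in
  intros k w Hw; destruct (cont_all k w Hw) as (? & ? & ? & ? & ? & ? & ?); assumption.

Lemma harmonic_Series_fun : harmonic_on_D (Series_fun F).
Proof.
  assert (EXX : forall w, inD w -> dx (dx (Series_fun F)) w = Series_fun F_xx w)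
    by (intros; apply is_derive_unique, is_derive_dx_sum_x; auto).
  assert (EXY : forall w, inD w -> dy (dx (Series_fun F)) w = Series_fun F_xy w)
    by (intros; apply is_derive_unique, is_derive_dx_sum_y; auto).
  assert (EYX : forall w, inD w -> dx (dy (Series_fun F)) w = Series_fun F_yx w)
    by (intros; apply is_derive_unique, is_derive_dy_sum_x; auto).
  assert (EYY : forall w, inD w -> dy (dy (Series_fun F)) w = Series_fun F_yy w)
    by (intros; apply is_derive_unique, is_derive_dy_sum_y; auto).
  intros z Hz. split.
  - repeat split.
    + exists (Series_fun F_x z). apply is_derive_Series_fun_x; auto.
    + exists (Series_fun F_y z). apply is_derive_Series_fun_y; auto.
    + exists (Series_fun F_xx z). apply is_derive_dx_sum_x, Hz.
    + exists (Series_fun F_xy z). apply is_derive_dx_sum_y, Hz.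
    + exists (Series_fun F_yx z). apply is_derive_dy_sum_x, Hz.
    + exists (Series_fun F_yy z). apply is_derive_dy_sum_y, Hz.
    + apply (continuous_eq_Series_fun F); [exact L | from_cont_all | reflexivity | exact Hz].
    + apply (continuous_eq_Series_fun F_x); [exact L_x | from_cont_all | exact dx_sum | exact Hz].
    + apply (continuous_eq_Series_fun F_y); [exact L_y | from_cont_all | exact dy_sum | exact Hz].
    + apply (continuous_eq_Series_fun F_xx); [exact L_xx | from_cont_all | exact EXX | exact Hz].
    + apply (continuous_eq_Series_fun F_xy); [exact L_xy | from_cont_all | exact EXY | exact Hz].
    + apply (continuous_eq_Series_fun F_yx); [exact L_yx | from_cont_all | exact EYX | exact Hz].
    + apply (continuous_eq_Series_fun F_yy); [exact L_yy | from_cont_all | exact EYY | exact Hz].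
  - rewrite EXX, EYY by auto. unfold Series_fun.
    rewrite <- Series_plus by (apply ex_series_Rabs, ex_series_loc_dominated; auto).
    rewrite (Series_ext _ (fun _ => 0 * 1)) by (intros; rewrite laplacian; auto; ring).
    rewrite Series_scal_l. ring.
Qed.

End HarmonicSeries.

Section CompPowHarmonic.

Variables (h : C -> R) (B : R) (c : nat -> R) (N : nat -> nat).

Hypotheses (h_harm : harmonic_on_D h) (B_ge0 : 0 <= B)
  (h_growth : forall w, inD w -> Rabs (h w) <= B * Cmod w)
  (N_pos : forall k, (1 <= N k)%nat)
  (majorant_summable : forall rho, 0 <= rho < 1 ->
     ex_series (fun k => Rabs (c k) * dpow_majorant rho (N k)))
  (majorant_lim : forall rho, 0 <= rho < 1 -> is_lim_seq (fun k => dpow_majorant rho (N k)) 0).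

Lemma loc_dominated_comp_pow (F : nat -> C -> R) :
  (forall k z M,
     Rabs (comp_pow h (c k) (N k) z) <= M /\ Rabs (comp_pow_x h (c k) (N k) z) <= M /\
     Rabs (comp_pow_y h (c k) (N k) z) <= M /\ Rabs (comp_pow_xx h (c k) (N k) z) <= M /\
     Rabs (comp_pow_xy h (c k) (N k) z) <= M /\ Rabs (comp_pow_yx h (c k) (N k) z) <= M /\
     Rabs (comp_pow_yy h (c k) (N k) z) <= M -> Rabs (F k z) <= M) ->
  loc_dominated F.
Proof.
  intros HF z Hz.
  destruct (comp_pow_all_le_near h B c N h_harm B_ge0 h_growth N_pos majorant_lim z Hz)
    as (d & rho & E & K & Hd & Hr & HE & Hnear & Hb).
  exists d, K, (fun k => Rabs (c k) * dpow_majorant rho (N k) * (B + 6 * E)).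
  split; [exact Hd|]. split; [apply ex_series_scal_r, majorant_summable, Hr|].
  split.
  { intros k. apply Rmult_le_pos; [apply Rmult_le_pos|lra].
    - apply Rabs_pos.
    - apply dpow_majorant_ge0; lra. }
  split; [exact Hnear|].
  intros k w Hk Hw. apply HF.
  replace (Rabs (c k) * dpow_majorant rho (N k) * (B + 6 * E))
    with (Rabs (c k) * (B + 6 * E) * dpow_majorant rho (N k)) by ring.
  apply Hb; auto.
Qed.

Theorem harmonic_Series_comp_pow :
  harmonic_on_D (Series_fun (fun k => comp_pow h (c k) (N k))).
Proof.
  apply (harmonic_Series_fun _ (fun k => comp_pow_x h (c k) (N k)) (fun k => comp_pow_y h (c k) (N k))
           (fun k => comp_pow_xx h (c k) (N k)) (fun k => comp_pow_xy h (c k) (N k))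
           (fun k => comp_pow_yx h (c k) (N k)) (fun k => comp_pow_yy h (c k) (N k)));
    try (apply loc_dominated_comp_pow; intros k z M HM; tauto);
    try (intros k [x y] Hz; simpl).
  - apply is_derive_comp_pow_x; auto.
  - apply is_derive_comp_pow_y; auto.
  - apply is_derive_comp_pow_xx; auto.
  - apply is_derive_comp_pow_xy; auto.
  - apply is_derive_comp_pow_yx; auto.
  - apply is_derive_comp_pow_yy; auto.
  - apply continuous_comp_pow_all; auto.
  - apply comp_pow_laplacian; auto.
Qed.

End CompPowHarmonic.

Lemma INR_mul_pow_le (s : R) (n : nat) : 0 <= s < 1 -> INR n * s ^ n <= 1 / (1 - s).
Proof.
  intros Hs.
  assert (H : forall m, INR m * s ^ m * (1 - s) <= 1 - s ^ m).
  { intros m. induction m as [|m IH].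
    - simpl. lra.
    - rewrite S_INR. simpl.
      assert (0 <= s ^ m) by (apply pow_le; lra).
      assert (s ^ m <= 1) by (rewrite <- (pow1 m); apply pow_incr; lra).
      assert (A1 : s * (INR m * s ^ m * (1 - s)) <= s * (1 - s ^ m)) by (apply Rmult_le_compat_l; lra).
      assert (A2 : 0 <= (1 - s) * (1 - s * s ^ m)) by (apply Rmult_le_pos; nra).
      lra. }
  specialize (H n).
  assert (0 <= s ^ n) by (apply pow_le; lra).
  apply (Rmult_le_reg_r (1 - s)); [lra|].
  replace (1 / (1 - s) * (1 - s)) with 1 by (field; lra). lra.
Qed.

Lemma cube_pow_le_geometric (rho : R) : 0 <= rho < 1 -> exists C s, 0 <= s < 1 /\ 0 <= C /\
  forall n : nat, (2 <= n)%nat -> INR n ^ 3 * rho ^ (n - 2) <= C * s ^ n.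
Proof.
  intros Hr. set (s := 1 - (1 - rho) / 4).
  assert (Hs : 3/4 <= s < 1) by (unfold s; lra).
  assert (H4 : rho <= s ^ 4).
  { assert (Bernoulli : forall a, 0 <= a <= 1 -> 1 - 4 * a <= (1 - a) ^ 4) by (intros; simpl; nra).
    specialize (Bernoulli ((1 - rho) / 4) ltac:(lra)). unfold s. lra. }
  set (K := 1 / (1 - s)).
  assert (HK : 0 <= K) by (unfold K; apply Rlt_le, Rdiv_lt_0_compat; lra).
  exists (K ^ 3 / s ^ 8), s. split; [lra|]. split.
  { apply Rmult_le_pos; [apply pow_le; auto | apply Rlt_le, Rinv_0_lt_compat, pow_lt; lra]. }
  intros n Hn.
  assert (Bn := INR_mul_pow_le s n ltac:(lra)). fold K in Bn.
  assert (P0 : 0 <= INR n * s ^ n) by (apply Rmult_le_pos; [apply pos_INR | apply pow_le; lra]).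
  assert (Hpow : rho ^ (n - 2) <= (s ^ 4) ^ (n - 2)) by (apply pow_incr; lra).
  rewrite <- pow_mult in Hpow.
  assert (E : s ^ (4 * (n - 2)) * s ^ 8 = s ^ n * s ^ n * s ^ n * s ^ n).
  { rewrite <- !pow_add. f_equal. lia. }
  assert (Hs8 : 0 < s ^ 8) by (apply pow_lt; lra).
  assert (Hsn : 0 <= s ^ n) by (apply pow_le; lra).
  assert (C3 : (INR n * s ^ n) ^ 3 <= K ^ 3) by (apply pow_incr; lra).
  apply (Rmult_le_reg_r (s ^ 8)); auto.
  replace (K ^ 3 / s ^ 8 * s ^ n * s ^ 8) with (K ^ 3 * s ^ n) by (field; lra).
  assert (L1 : INR n ^ 3 * rho ^ (n - 2) * s ^ 8 <= INR n ^ 3 * (s ^ (4 * (n - 2)) * s ^ 8)).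
  { rewrite <- Rmult_assoc. apply Rmult_le_compat_r; [lra|].
    apply Rmult_le_compat_l; [apply pow_le, pos_INR | lra]. }
  rewrite E in L1.
  replace (INR n ^ 3 * (s ^ n * s ^ n * s ^ n * s ^ n)) with ((INR n * s ^ n) ^ 3 * s ^ n) in L1 by ring.
  assert ((INR n * s ^ n) ^ 3 * s ^ n <= K ^ 3 * s ^ n) by (apply Rmult_le_compat_r; auto).
  lra.
Qed.

Lemma lacunary_exponent_facts (A k : nat) : (2 <= A)%nat ->
  (k < A ^ k)%nat /\ (A ^ k < 2 ^ (A ^ k))%nat /\ (2 <= 2 ^ (A ^ k))%nat.
Proof.
  intros HA. split; [apply Nat.pow_gt_lin_r; lia|]. split; [apply Nat.pow_gt_lin_r; lia|].
  assert (1 <= A ^ k)%nat by (assert (H := Nat.pow_gt_lin_r A k ltac:(lia)); lia).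
  replace 2%nat with (2 ^ 1)%nat at 1 by reflexivity. apply Nat.pow_le_mono_r; lia.
Qed.

Lemma ex_series_lacunary_majorant (A : nat) : (2 <= A)%nat -> forall rho, 0 <= rho < 1 ->
  ex_series (fun k => Rabs (INR (A ^ k)) * dpow_majorant rho (2 ^ (A ^ k))).
Proof.
  intros HA rho Hr. destruct (cube_pow_le_geometric rho Hr) as [C [s [Hs [HC Hb]]]].
  apply (ex_series_le (K:=R_AbsRing) (V:=R_CompleteNormedModule) _ (fun k => C * s ^ k)).
  - intros k. change (Rabs (Rabs (INR (A ^ k)) * dpow_majorant rho (2 ^ (A ^ k))) <= C * s ^ k).
    destruct (lacunary_exponent_facts A k HA) as [F1 [F2 F3]].
    set (N := (2 ^ (A ^ k))%nat) in *.
    assert (L0 := dpow_majorant_ge0 rho N ltac:(lra)).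
    rewrite Rabs_pos_eq by (apply Rmult_le_pos; [apply Rabs_pos | exact L0]).
    rewrite Rabs_pos_eq by apply pos_INR. unfold dpow_majorant in *.
    assert (L1 : INR (A ^ k) <= INR N) by (apply le_INR; lia).
    assert (L3 : INR (A ^ k) * (INR N ^ 2 * rho ^ (N - 2)) <= INR N ^ 3 * rho ^ (N - 2)).
    { replace (INR N ^ 3 * rho ^ (N - 2)) with (INR N * (INR N ^ 2 * rho ^ (N - 2))) by ring.
      apply Rmult_le_compat_r; auto. }
    assert (L4 := Hb N F3).
    assert (L5 : s ^ N <= s ^ k) by (apply pow_le_pow_le1; lra || lia).
    assert (L6 : C * s ^ N <= C * s ^ k) by (apply Rmult_le_compat_l; auto).
    lra.
  - apply (ex_series_scal_l (V:=R_NormedModule) C (fun k => s ^ k)), ex_series_geom.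
    rewrite Rabs_pos_eq; lra.
Qed.

Lemma lacunary_majorant_lim (A : nat) : (2 <= A)%nat -> forall rho, 0 <= rho < 1 ->
  is_lim_seq (fun k => dpow_majorant rho (2 ^ (A ^ k))) 0.
Proof.
  intros HA rho Hr.
  apply (is_lim_seq_le_le (fun _ => 0) _ (fun k => Rabs (INR (A ^ k)) * dpow_majorant rho (2 ^ (A ^ k)))).
  - intros k. assert (W0 := dpow_majorant_ge0 rho (2 ^ (A ^ k)) ltac:(lra)). split; [exact W0|].
    assert (1 <= Rabs (INR (A ^ k))).
    { rewrite Rabs_pos_eq by apply pos_INR. apply (le_INR 1).
      destruct (lacunary_exponent_facts A k HA). lia. }
    nra.
  - apply is_lim_seq_const.
  - apply ex_series_lim_0, ex_series_lacunary_majorant; auto.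
Qed.

(** * Growth of the sum *)

Lemma ln2_pos : 0 < ln 2.
Proof. rewrite <- ln_1. apply ln_increasing; lra. Qed.

Lemma pow_exp (a : R) (M : nat) : exp a ^ M = exp (a * INR M).
Proof.
  induction M as [|M IH]; [simpl; rewrite Rmult_0_r, exp_0; reflexivity|].
  rewrite S_INR. simpl. rewrite IH, <- exp_plus. f_equal. ring.
Qed.

Lemma sqr_le_4_exp (y : R) : 0 <= y -> y ^ 2 <= 4 * exp y.
Proof.
  intros Hy. replace y with (y/2 + y/2) at 2 by field. rewrite exp_plus.
  pose proof (exp_ineq1_le (y/2)). nra.
Qed.

Lemma ln_le_self (y : R) : 0 < y -> ln y <= y.
Proof. intros Hy. pose proof (exp_ineq1_le (ln y)). rewrite exp_ln in H by exact Hy. lra. Qed.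

Definition lac_term (h : C -> R) (A : nat) (z : C) (k : nat) : R :=
  INR (A ^ k) * h (Cpow z (2 ^ (A ^ k))).

Lemma lac_term_abs_le (h : C -> R) (B : R) (A k : nat) (z : C) : (2 <= A)%nat ->
  (forall w, inD w -> Rabs (h w) <= B * Cmod w) -> inD z ->
  Rabs (lac_term h A z k) <= B * (INR (A ^ k) * Cmod z ^ (2 ^ (A ^ k))).
Proof.
  intros HA Hg Hz. unfold lac_term.
  destruct (lacunary_exponent_facts A k HA) as (_ & _ & HN).
  assert (Hh := Hg _ (inD_Cpow z (2 ^ (A ^ k)) Hz ltac:(lia))). rewrite Cmod_pow in Hh.
  rewrite Rabs_mult, (Rabs_pos_eq (INR _)) by apply pos_INR.
  assert (HA0 := pos_INR (A ^ k)).
  assert (INR (A ^ k) * Rabs (h (Cpow z (2 ^ (A ^ k)))) <= INR (A ^ k) * (B * Cmod z ^ (2 ^ (A ^ k))))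
    by (apply Rmult_le_compat_l; auto).
  lra.
Qed.

Definition lac_scale (t : R) (A k : nat) : R := t * 2 ^ (A ^ k).

Definition log2_inv (t : R) : R := - ln t / ln 2.

Lemma lac_scale_pos t A k : 0 < t -> 0 < lac_scale t A k.
Proof. intros. unfold lac_scale. apply Rmult_lt_0_compat; auto. apply pow_lt; lra. Qed.

Lemma lac_scale_double (t : R) (A k : nat) : 0 < t -> (2 <= A)%nat ->
  2 * lac_scale t A k <= lac_scale t A (S k).
Proof.
  intros Ht HA. unfold lac_scale.
  assert (H : (A ^ k + 1 <= A ^ S k)%nat).
  { simpl. assert (1 <= A ^ k)%nat by (assert (Hh := Nat.pow_gt_lin_r A k ltac:(lia)); lia). nia. }
  replace (A ^ S k)%nat with ((A ^ k + 1) + (A ^ S k - (A ^ k + 1)))%nat by lia.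
  rewrite !pow_add.
  assert (1 <= 2 ^ (A ^ S k - (A ^ k + 1))) by (apply pow_R1_Rle; lra).
  assert (0 < t * 2 ^ (A ^ k)) by (apply Rmult_lt_0_compat; [lra | apply pow_lt; lra]).
  replace (2 ^ 1) with 2 by ring.
  replace (t * (2 ^ A ^ k * 2 * 2 ^ (A ^ S k - (A ^ k + 1)))) with
    ((2 * (t * 2 ^ A ^ k)) * 2 ^ (A ^ S k - (A ^ k + 1))) by ring.
  nra.
Qed.

Lemma INR_pow_double (A n : nat) : (2 <= A)%nat -> 2 * INR (A ^ n) <= INR (A ^ S n).
Proof.
  intros HA. rewrite !pow_INR. simpl. assert (2 <= INR A) by (apply (le_INR 2); lia).
  assert (0 <= INR A ^ n) by (apply pow_le; lra). nra.
Qed.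

Section GrowthSums.

Variables (t : R) (A : nat).
Hypotheses (t_pos : 0 < t) (A_ge2 : (2 <= A)%nat).

Let small k := if Rle_dec (lac_scale t A k) 1 then INR (A ^ k) else 0.
Let large k := if Rle_dec (lac_scale t A k) 1 then 0 else / lac_scale t A k.

(* [A^k] at least doubles with [k], so the small-range sum is at most twice its last term. *)
Lemma sum_small_le (L : R) : 0 <= L -> (forall k, lac_scale t A k <= 1 -> INR (A ^ k) <= L) ->
  forall n, sum_f_R0 small n <= 2 * L /\ sum_f_R0 small n <= 2 * INR (A ^ n).
Proof.
  intros HL0 HL n. unfold small. induction n as [|n [IH1 IH2]].
  - simpl. destruct (Rle_dec (lac_scale t A 0) 1) as [Hc|Hc].
    + specialize (HL 0%nat Hc). simpl in *. split; lra.
    + simpl. split; lra.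
  - rewrite tech5. assert (St := INR_pow_double A n A_ge2).
    assert (P := pos_INR (A ^ n)).
    destruct (Rle_dec (lac_scale t A (S n)) 1) as [Hc|Hc].
    + specialize (HL (S n) Hc). split; lra.
    + split; lra.
Qed.

(* [lac_scale t A k] at least doubles with [k], so the inverses form a sub-geometric series. *)
Lemma sum_large_le (n : nat) :
  (lac_scale t A n <= 1 -> sum_f_R0 large n = 0) /\
  (1 < lac_scale t A n -> sum_f_R0 large n <= 2 - / lac_scale t A n).
Proof.
  unfold large. induction n as [|n [IH1 IH2]].
  - simpl. split; intros Hc.
    + destruct (Rle_dec (lac_scale t A 0) 1); [reflexivity | lra].
    + destruct (Rle_dec (lac_scale t A 0) 1); [lra|].
      assert (/ lac_scale t A 0 < 1) by (rewrite <- Rinv_1; apply Rinv_lt_contravar; lra). lra.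
  - assert (Hs := lac_scale_double t A n t_pos A_ge2).
    assert (Hp := lac_scale_pos t A n t_pos). assert (Hp' := lac_scale_pos t A (S n) t_pos).
    rewrite tech5. split; intros Hc.
    + rewrite IH1 by lra. destruct (Rle_dec (lac_scale t A (S n)) 1); [ring | lra].
    + destruct (Rle_dec (lac_scale t A (S n)) 1) as [X|X]; [lra|].
      destruct (Rle_dec (lac_scale t A n) 1) as [Y|Y].
      * rewrite IH1 by exact Y.
        assert (/ lac_scale t A (S n) < 1) by (rewrite <- Rinv_1; apply Rinv_lt_contravar; lra). lra.
      * assert (IH := IH2 ltac:(lra)).
        assert (2 / lac_scale t A (S n) <= / lac_scale t A n).
        { unfold Rdiv. apply (Rmult_le_reg_r (lac_scale t A n * lac_scale t A (S n))); [nra|].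
          field_simplify; lra. }
        unfold Rdiv in H. lra.
Qed.

Lemma sum_large_le_2 (n : nat) : sum_f_R0 large n <= 2.
Proof.
  destruct (sum_large_le n) as [L1 L2].
  destruct (Rle_dec (lac_scale t A n) 1) as [X|X]; [rewrite L1; auto; lra|].
  assert (0 < / lac_scale t A n) by (apply Rinv_0_lt_compat, lac_scale_pos, t_pos).
  specialize (L2 ltac:(lra)). lra.
Qed.

Lemma INR_pow_le_log2_inv (k : nat) : lac_scale t A k <= 1 -> INR (A ^ k) <= log2_inv t.
Proof.
  intros Hy. assert (H := ln_le _ _ (lac_scale_pos t A k t_pos) Hy).
  unfold lac_scale in H. rewrite ln_1, ln_mult, ln_pow in H by (try apply pow_lt; lra).
  unfold log2_inv. assert (H2 := ln2_pos). apply (Rmult_le_reg_r (ln 2)); auto.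
  unfold Rdiv. rewrite Rmult_assoc, Rinv_l by lra. lra.
Qed.

Lemma log2_inv_ge0 : t <= 1 -> 0 <= log2_inv t.
Proof.
  intros Ht. unfold log2_inv. assert (ln t <= 0) by (rewrite <- ln_1; apply ln_le; lra).
  assert (H2 := ln2_pos). unfold Rdiv. apply Rmult_le_pos; [lra | left; apply Rinv_0_lt_compat; lra].
Qed.

Lemma lac_exp_term_le (k : nat) : t <= 1 ->
  INR (A ^ k) * exp (- lac_scale t A k) <= small k + (log2_inv t + 4 / ln 2) * large k.
Proof.
  intros Ht1. unfold small, large. assert (Hy := lac_scale_pos t A k t_pos).
  assert (Hs := pos_INR (A ^ k)).
  destruct (Rle_dec (lac_scale t A k) 1) as [C|C].
  - assert (exp (- lac_scale t A k) <= 1) by (rewrite <- exp_0; left; apply exp_increasing; lra).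
    assert (INR (A ^ k) * exp (- lac_scale t A k) <= INR (A ^ k) * 1) by (apply Rmult_le_compat_l; auto).
    lra.
  - (* [A^k = log2 y + log2 (1/t)] with [y = t 2^(A^k) > 1], and [y log2 y <= (4/ln 2) e^y] *)
    set (y := lac_scale t A k) in *.
    assert (Hl2 := ln2_pos). assert (HL := log2_inv_ge0 Ht1).
    assert (Es : INR (A ^ k) = ln y / ln 2 + log2_inv t).
    { unfold y, lac_scale. rewrite ln_mult, ln_pow by (try apply pow_lt; lra).
      unfold log2_inv. field. lra. }
    assert (Hey := exp_pos y).
    rewrite exp_Ropp, Rplus_0_l.
    assert (Hye : y <= exp y) by (pose proof (exp_ineq1_le y); lra).
    assert (Hy2 : y ^ 2 <= 4 * exp y) by (apply sqr_le_4_exp; lra).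
    assert (Hln : 0 <= ln y) by (rewrite <- ln_1; apply ln_le; lra).
    assert (Hlny : ln y <= y) by (apply ln_le_self; lra).
    apply (Rmult_le_reg_r (y * exp y)); [nra|].
    replace (INR (A ^ k) * / exp y * (y * exp y)) with (INR (A ^ k) * y) by (field; lra).
    replace ((log2_inv t + 4 / ln 2) * / y * (y * exp y)) with ((log2_inv t + 4 / ln 2) * exp y)
      by (field; lra).
    rewrite Es.
    assert (A1 : log2_inv t * y <= log2_inv t * exp y) by (apply Rmult_le_compat_l; auto).
    assert (A2 : ln y * y <= 4 * exp y) by (simpl in Hy2; nra).
    assert (A3 : ln y / ln 2 * y <= 4 / ln 2 * exp y).
    { unfold Rdiv. replace (ln y * / ln 2 * y) with ((ln y * y) * / ln 2) by ring.
      replace (4 * / ln 2 * exp y) with ((4 * exp y) * / ln 2) by ring.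
      apply Rmult_le_compat_r; [left; apply Rinv_0_lt_compat; lra | exact A2]. }
    lra.
Qed.

Lemma sum_lac_exp_le (n : nat) : t <= 1 ->
  sum_f_R0 (fun k => INR (A ^ k) * exp (- lac_scale t A k)) n <= 4 * log2_inv t + 8 / ln 2.
Proof.
  intros Ht1.
  eapply Rle_trans; [apply sum_Rle; intros k _; apply (lac_exp_term_le k Ht1)|].
  rewrite plus_sum.
  rewrite (sum_eq (fun i => (log2_inv t + 4 / ln 2) * large i)
                  (fun i => large i * (log2_inv t + 4 / ln 2))) by (intros; ring).
  rewrite <- scal_sum.
  destruct (sum_small_le (log2_inv t) (log2_inv_ge0 Ht1) INR_pow_le_log2_inv n) as [S1 _].
  assert (S2 := sum_large_le_2 n).
  assert (Hl2 := ln2_pos). assert (HL := log2_inv_ge0 Ht1).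
  assert (0 <= log2_inv t + 4 / ln 2) by (assert (0 < 4 / ln 2) by (apply Rdiv_lt_0_compat; lra); lra).
  assert ((log2_inv t + 4 / ln 2) * sum_f_R0 large n <= (log2_inv t + 4 / ln 2) * 2)
    by (apply Rmult_le_compat_l; auto).
  lra.
Qed.

End GrowthSums.

Lemma Series_lac_term_le_log (h : C -> R) (B : R) (A : nat) : 0 <= B -> (2 <= A)%nat ->
  (forall w, inD w -> Rabs (h w) <= B * Cmod w) ->
  (forall z, inD z -> ex_series (fun k => Rabs (lac_term h A z k))) ->
  forall z, inD z -> Series (lac_term h A z) <= 8 * B / ln 2 * ln (exp 1 / (1 - Cmod z)).
Proof.
  intros HB HA Hg Hex z Hz. assert (Hl2 := ln2_pos).
  set (t := 1 - Cmod z).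
  assert (Ht : 0 < t <= 1) by (unfold t; unfold inD in Hz; pose proof (Cmod_ge_0 z); lra).
  (* [|z| = 1 - t <= e^(-t)] *)
  assert (Tb : forall k, Rabs (lac_term h A z k) <= B * (INR (A ^ k) * exp (- lac_scale t A k))).
  { intros k. eapply Rle_trans; [apply lac_term_abs_le; auto|].
    apply Rmult_le_compat_l; [exact HB|]. apply Rmult_le_compat_l; [apply pos_INR|].
    assert (Hr : Cmod z <= exp (- t)) by (pose proof (exp_ineq1_le (- t)); unfold t in *; lra).
    eapply Rle_trans; [apply pow_incr; split; [apply Cmod_ge_0 | exact Hr]|].
    rewrite pow_exp, pow_INR. unfold lac_scale. replace (INR 2) with 2 by (simpl; ring).
    right. f_equal. ring. }
  assert (Habs := Hex z Hz).
  eapply Rle_trans; [apply Rle_abs|]. eapply Rle_trans; [apply Series_Rabs, Habs|].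
  apply Rle_trans with (B * (4 * log2_inv t + 8 / ln 2)).
  { apply Series_le_of_partial; [exact Habs|]. intros n.
    eapply Rle_trans; [apply sum_Rle; intros k _; apply Tb|].
    rewrite (sum_eq _ (fun k => (INR (A ^ k) * exp (- lac_scale t A k)) * B)) by (intros; ring).
    rewrite <- scal_sum. apply Rmult_le_compat_l; [exact HB|]. apply (sum_lac_exp_le t A); auto; lra. }
  assert (Eln : ln (exp 1 / t) = 1 + log2_inv t * ln 2).
  { unfold Rdiv. rewrite ln_mult, ln_exp, ln_Rinv by (apply exp_pos || apply Rinv_0_lt_compat || idtac; lra).
    unfold log2_inv. field. lra. }
  rewrite Eln. assert (HL := log2_inv_ge0 t ltac:(lra) ltac:(lra)).
  replace (8 * B / ln 2 * (1 + log2_inv t * ln 2)) with (8 * B / ln 2 + 8 * B * log2_inv t) by (field; lra).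
  replace (B * (4 * log2_inv t + 8 / ln 2)) with (4 * B * log2_inv t + 8 * B / ln 2) by (field; lra).
  assert (0 <= B * log2_inv t) by (apply Rmult_le_pos; auto). lra.
Qed.

(** * Lower bound along rays *)

Lemma Cmod_polar (r th : R) : 0 <= r -> Cmod (polar r th) = r.
Proof.
  intros Hr. unfold Cmod, polar. simpl fst; simpl snd.
  replace ((r * cos th) ^ 2 + (r * sin th) ^ 2) with (r * r * ((sin th)² + (cos th)²))
    by (unfold Rsqr; ring).
  rewrite sin2_cos2, Rmult_1_r. apply sqrt_square. exact Hr.
Qed.

Lemma Cpow_polar (r th : R) (n : nat) : Cpow (polar r th) n = polar (r ^ n) (INR n * th).
Proof.
  induction n as [|n IH].
  - simpl. unfold polar. rewrite Rmult_0_l, cos_0, sin_0. apply injective_projections; simpl; ring.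
  - rewrite Cpow_S, IH. unfold polar. simpl fst; simpl snd. rewrite S_INR.
    replace ((INR n + 1) * th) with (th + INR n * th) by ring.
    rewrite cos_plus, sin_plus. change (r ^ S n) with (r * r ^ n). f_equal; ring.
Qed.

Lemma polar_reduce (r th : R) (N : nat) : 0 <= th ->
  exists th', 0 <= th' < 2 * PI /\ polar r (INR N * th) = polar r th'.
Proof.
  intros Hth. assert (HPI := PI_RGT_0).
  assert (Hx : 0 <= INR N * th / (2 * PI)).
  { apply Rmult_le_pos; [apply Rmult_le_pos; [apply pos_INR | lra] | left; apply Rinv_0_lt_compat; lra]. }
  destruct (nfloor_ex _ Hx) as [q [Hq1 Hq2]].
  exists (INR N * th - 2 * INR q * PI). split.
  - assert (X1 : INR q * (2 * PI) <= INR N * th).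
    { apply (Rmult_le_reg_r (/ (2 * PI))); [apply Rinv_0_lt_compat; lra|].
      rewrite Rmult_assoc, Rinv_r by lra. lra. }
    assert (X2 : INR N * th < (INR q + 1) * (2 * PI)).
    { apply (Rmult_lt_reg_r (/ (2 * PI))); [apply Rinv_0_lt_compat; lra|].
      rewrite (Rmult_assoc (INR q + 1)), Rinv_r by lra. lra. }
    lra.
  - unfold polar. set (th' := INR N * th - 2 * INR q * PI).
    rewrite <- (cos_period th' q), <- (sin_period th' q). unfold th'.
    replace (INR N * th - 2 * INR q * PI + 2 * INR q * PI) with (INR N * th) by ring.
    reflexivity.
Qed.

Lemma ln3_ge1 : 1 <= ln 3.
Proof. rewrite <- (ln_exp 1). apply ln_le; [apply exp_pos | apply exp_le_3]. Qed.

Lemma ln2_lt1 : ln 2 < 1.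
Proof.
  rewrite <- (ln_exp 1). apply ln_increasing; [lra|].
  pose proof (exp_ineq1 1 ltac:(lra)). lra.
Qed.

Lemma nth_root_near_1 (rho : R) (N : nat) : 1/6 < rho < 1/3 -> 6 <= INR N ->
  exists r, 0 < r < 1 /\ r ^ N = rho /\ 1 - r <= 6 / INR N /\ 1 / (2 * INR N) <= 1 - r.
Proof.
  intros Hr HN.
  assert (HNp : 0 < INR N) by lra.
  assert (L1 : ln rho < - 1).
  { assert (ln rho < ln (1/3)) by (apply ln_increasing; lra).
    unfold Rdiv in H. rewrite Rmult_1_l, ln_Rinv in H by lra. pose proof ln3_ge1. lra. }
  assert (L2 : - ln rho < 6).
  { rewrite <- ln_Rinv by lra. eapply Rle_lt_trans; [apply ln_le_self, Rinv_0_lt_compat; lra|].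
    apply (Rmult_lt_reg_r rho); [lra|]. rewrite Rinv_l by lra. lra. }
  set (a := - ln rho / INR N).
  assert (Ha1 : 1 / INR N <= a) by (apply Rmult_le_compat_r; [left; apply Rinv_0_lt_compat |]; lra).
  assert (Ha2 : a <= 6 / INR N) by (apply Rmult_le_compat_r; [left; apply Rinv_0_lt_compat |]; lra).
  assert (Ha3 : a <= 1).
  { eapply Rle_trans; [exact Ha2|]. apply (Rmult_le_reg_r (INR N)); auto.
    unfold Rdiv. rewrite Rmult_assoc, Rinv_l by lra. lra. }
  assert (Ha0 : 0 < a) by (assert (0 < 1 / INR N) by (apply Rdiv_lt_0_compat; lra); lra).
  exists (exp (- a)).
  split; [split; [apply exp_pos | rewrite <- exp_0; apply exp_increasing; lra]|].
  split.
  { rewrite pow_exp. replace (- a * INR N) with (ln rho) by (unfold a; field; lra).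
    apply exp_ln. lra. }
  split; [pose proof (exp_ineq1_le (- a)); lra|].
  assert (E1 : exp (- a) <= 1 / (1 + a)).
  { rewrite exp_Ropp. pose proof (exp_ineq1_le a). unfold Rdiv. rewrite Rmult_1_l.
    apply Rinv_le_contravar; lra. }
  assert (E2 : 1 / (2 * INR N) <= a / 2).
  { unfold Rdiv. rewrite Rinv_mult. unfold Rdiv in Ha1. lra. }
  assert (E3 : a / 2 <= 1 - 1 / (1 + a)).
  { replace (1 - 1 / (1 + a)) with (a / (1 + a)) by (field; lra).
    apply Rmult_le_compat_l; [lra | apply Rinv_le_contravar; lra]. }
  lra.
Qed.

Lemma sum_INR_pow_le (A m : nat) : (2 <= A)%nat ->
  (INR A - 1) * sum_f_R0 (fun k => INR (A ^ k)) m <= INR (A ^ S m).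
Proof.
  intros HA. assert (2 <= INR A) by (apply (le_INR 2); lia).
  induction m as [|m IH].
  - change (sum_f_R0 (fun k => INR (A ^ k)) 0) with (INR (A ^ 0)).
    rewrite !pow_INR, pow_O, pow_1. lra.
  - rewrite tech5, Rmult_plus_distr_l.
    assert (E : INR (A ^ S (S m)) = INR A * INR (A ^ S m)) by (rewrite !pow_INR; simpl; ring).
    rewrite E. assert (0 <= INR (A ^ S m)) by apply pos_INR. nra.
Qed.

Lemma sum_third_pow_le (n : nat) : sum_f_R0 (fun j => (1/3) ^ j) n <= 3/2.
Proof.
  rewrite tech3 by lra.
  assert (0 <= (1/3) ^ S n) by (apply pow_le; lra).
  replace ((1 - (1/3) ^ S n) / (1 - 1/3)) with (3/2 * (1 - (1/3) ^ S n)) by field.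
  lra.
Qed.

Lemma lac_tail_weight_le (A m j : nat) (r rho : R) : (3 <= A)%nat -> 0 < r ->
  r ^ (2 ^ (A ^ m)) = rho -> 0 <= rho <= 1/3 ->
  INR (A ^ (S m + j)) * r ^ (2 ^ (A ^ (S m + j))) <= INR A * (3/2) * (1/3) ^ j.
Proof.
  intros HA Hr Hrho Hrb.
  set (s := (A ^ (m + j))%nat).
  assert (Ek : (A ^ (S m + j) = A * s)%nat) by reflexivity.
  assert (Hs1 : (A ^ m <= s)%nat) by (unfold s; apply Nat.pow_le_mono_r; lia).
  assert (Hsj : (j < s)%nat) by (unfold s; assert (H := Nat.pow_gt_lin_r A (m + j) ltac:(lia)); lia).
  set (D := (A * s - A ^ m)%nat).
  assert (HD : (2 * s <= D)%nat) by (unfold D; nia).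
  assert (E2 : (2 ^ (A ^ (S m + j)) = 2 ^ (A ^ m) * 2 ^ D)%nat).
  { rewrite <- Nat.pow_add_r. f_equal. rewrite Ek. unfold D. nia. }
  rewrite E2, pow_mult, Hrho, Ek, mult_INR.
  assert (HDs : (2 * s < 2 ^ D)%nat) by (assert (H := Nat.pow_gt_lin_r 2 D ltac:(lia)); lia).
  assert (P1 : rho ^ (2 ^ D) <= (1/3) ^ (2 ^ D)) by (apply pow_incr; lra).
  assert (P2 : (1/3) ^ (2 ^ D) <= (1/3) ^ (2 * s)) by (apply pow_le_pow_le1; lra || lia).
  rewrite pow_mult in P2. replace ((1/3) ^ 2) with ((1/3) * (1/3)) in P2 by ring.
  rewrite Rpow_mult_distr in P2.
  assert (P3 := INR_mul_pow_le (1/3) s ltac:(lra)).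
  replace (1 / (1 - 1/3)) with (3/2) in P3 by field.
  assert (P4 : (1/3) ^ s <= (1/3) ^ j) by (apply pow_le_pow_le1; lra || lia).
  assert (Q0 : 0 <= (1/3) ^ s) by (apply pow_le; lra).
  assert (Q1 := pos_INR s). assert (Q2 := pos_INR A).
  assert (Q3 : 0 <= rho ^ (2 ^ D)) by (apply pow_le; lra).
  assert (R1 : INR s * rho ^ (2 ^ D) <= INR s * (1/3) ^ s * (1/3) ^ s).
  { rewrite Rmult_assoc. apply Rmult_le_compat_l; lra. }
  assert (R2 : INR s * (1/3) ^ s * (1/3) ^ s <= 3/2 * (1/3) ^ j).
  { apply Rmult_le_compat; try lra. apply Rmult_le_pos; lra. }
  replace (INR A * INR s * rho ^ (2 ^ D)) with (INR A * (INR s * rho ^ (2 ^ D))) by ring.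
  replace (INR A * (3/2) * (1/3) ^ j) with (INR A * (3/2 * (1/3) ^ j)) by ring.
  apply Rmult_le_compat_l; lra.
Qed.

Lemma minus_ln_one_minus_le (M : nat) (r : R) : (1 <= M)%nat -> r < 1 ->
  1 / (2 * INR (2 ^ M)) <= 1 - r -> - ln (1 - r) <= 2 * INR M.
Proof.
  intros HM Hr Hlow.
  assert (EN : INR (2 ^ M) = 2 ^ M) by (rewrite pow_INR; reflexivity).
  rewrite EN in Hlow.
  assert (H2M : 0 < 2 * 2 ^ M) by (assert (0 < 2 ^ M) by (apply pow_lt; lra); lra).
  assert (X := ln_le _ _ (Rdiv_lt_0_compat 1 _ ltac:(lra) H2M) Hlow).
  unfold Rdiv in X. rewrite Rmult_1_l, ln_Rinv, ln_mult, ln_pow in X by (try apply pow_lt; lra).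
  assert (H2 := ln2_lt1). assert (H3 := ln2_pos).
  assert (1 <= INR M) by (apply (le_INR 1); lia).
  assert ((INR M + 1) * ln 2 <= INR M + 1) by (apply Rle_trans with ((INR M + 1) * 1); nra).
  lra.
Qed.

Section RayLowerBound.

Variables (h : C -> R) (B : R) (A : nat).

Hypotheses (B_ge0 : 0 <= B) (A_ge3 : (3 <= A)%nat) (A_large : 8 * B <= INR A - 1)
  (h_growth : forall w, inD w -> Rabs (h w) <= B * Cmod w)
  (lac_abs_summable : forall z, inD z -> ex_series (fun k => Rabs (lac_term h A z k))).

Lemma lac_term_abs_le_INR (z : C) (k : nat) : inD z -> Rabs (lac_term h A z k) <= B * INR (A ^ k).
Proof.
  intros Hz. eapply Rle_trans; [apply lac_term_abs_le; auto; lia|].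
  apply Rmult_le_compat_l; [exact B_ge0|].
  assert (Hz1 : Cmod z ^ (2 ^ (A ^ k)) <= 1).
  { rewrite <- (pow1 (2 ^ (A ^ k))). apply pow_incr. split; [apply Cmod_ge_0 | unfold inD in Hz; lra]. }
  assert (0 <= Cmod z ^ (2 ^ (A ^ k))) by (apply pow_le, Cmod_ge_0).
  assert (HA0 := pos_INR (A ^ k)). nra.
Qed.

Lemma lac_head_le (z : C) (m : nat) : inD z ->
  Rabs (sum_f_R0 (lac_term h A z) m) <= INR (A ^ S m) / 8.
Proof.
  intros Hz. eapply Rle_trans; [apply sum_f_R0_triangle|].
  eapply Rle_trans; [apply sum_Rle; intros k _; apply lac_term_abs_le_INR, Hz|].
  rewrite (sum_eq _ (fun k => INR (A ^ k) * B)) by (intros; ring). rewrite <- scal_sum.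
  assert (HS := sum_INR_pow_le A m ltac:(lia)).
  assert (0 <= sum_f_R0 (fun k => INR (A ^ k)) m) by (apply cond_pos_sum; intros; apply pos_INR).
  assert (B * sum_f_R0 (fun k => INR (A ^ k)) m <= (INR A - 1) / 8 * sum_f_R0 (fun k => INR (A ^ k)) m)
    by (apply Rmult_le_compat_r; lra).
  lra.
Qed.

Lemma lac_tail_le (m : nat) (r rho theta : R) : 0 < r < 1 ->
  r ^ (2 ^ (A ^ m)) = rho -> 0 <= rho <= 1/3 ->
  Rabs (Series (fun j => lac_term h A (polar r theta) (S m + j))) <= 9/4 * B * INR A.
Proof.
  intros Hr Hrho Hrb.
  assert (HzD : inD (polar r theta)) by (unfold inD; rewrite Cmod_polar; lra).
  assert (Hext : ex_series (fun j => Rabs (lac_term h A (polar r theta) (S m + j)))).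
  { apply (ex_series_incr_n (fun k => Rabs (lac_term h A (polar r theta) k)) (S m)).
    apply lac_abs_summable, HzD. }
  eapply Rle_trans; [apply Series_Rabs, Hext|].
  apply Series_le_of_partial; [exact Hext|]. intros n.
  eapply Rle_trans.
  { apply sum_Rle. intros j _.
    eapply Rle_trans; [apply lac_term_abs_le; auto; lia|].
    rewrite Cmod_polar by lra.
    apply Rmult_le_compat_l; [exact B_ge0|]. apply (lac_tail_weight_le A m j r rho); auto; lra. }
  rewrite (sum_eq _ (fun j => (1/3) ^ j * (B * (INR A * (3/2))))) by (intros; ring).
  rewrite <- scal_sum. assert (G := sum_third_pow_le n).
  assert (HA0 := pos_INR A).
  assert (0 <= B * (INR A * (3/2))) by (apply Rmult_le_pos; lra).
  assert (B * (INR A * (3/2)) * sum_f_R0 (fun j => (1/3) ^ j) n <= B * (INR A * (3/2)) * (3/2))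
    by (apply Rmult_le_compat_l; auto).
  change (sum_f_R0 (pow (1/3)) n) with (sum_f_R0 (fun j => (1/3) ^ j) n). lra.
Qed.

Lemma Series_lac_term_ge (m : nat) (theta th' rho r : R) :
  18 * B * INR A <= INR (A ^ S m) -> 0 < r < 1 -> r ^ (2 ^ (A ^ S m)) = rho -> 0 <= rho <= 1/3 ->
  polar 1 (INR (2 ^ (A ^ S m)) * theta) = polar 1 th' -> 3/4 <= h (polar rho th') ->
  INR (A ^ S m) / 2 <= Series (lac_term h A (polar r theta)).
Proof.
  intros HM Hr HrN Hrho Eth' Hh.
  assert (Htail := lac_tail_le (S m) r rho theta Hr HrN Hrho).
  set (z := polar r theta) in *.
  assert (HzD : inD z) by (unfold inD, z; rewrite Cmod_polar; lra).
  assert (Hhead := lac_head_le z m HzD).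
  set (a := lac_term h A z) in *.
  assert (Ham : a (S m) = INR (A ^ S m) * h (polar rho th')).
  { unfold a, lac_term, z. rewrite Cpow_polar, HrN. unfold polar in Eth' |- *.
    assert (E1 := f_equal fst Eth'). assert (E2 := f_equal snd Eth'). cbn [fst snd] in E1, E2.
    rewrite !Rmult_1_l in E1, E2. rewrite E1, E2. reflexivity. }
  assert (Hexa : ex_series a) by (apply ex_series_Rabs, lac_abs_summable, HzD).
  rewrite (Series_incr_n a (S (S m))) by (lia || exact Hexa). simpl pred.
  rewrite tech5, Ham.
  assert (INR (A ^ S m) * (3/4) <= INR (A ^ S m) * h (polar rho th'))
    by (apply Rmult_le_compat_l; [apply pos_INR | lra]).
  assert (Y1 := Rle_abs (- sum_f_R0 a m)). rewrite Rabs_Ropp in Y1.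
  assert (Y2 := Rle_abs (- Series (fun j => a (S (S m) + j)%nat))). rewrite Rabs_Ropp in Y2.
  lra.
Qed.

Lemma lac_ray_lower_bound :
  (forall theta, 0 <= theta < 2 * PI -> forall eps, 0 < eps ->
     exists r, 1/6 < r < 1/3 /\ h (polar r theta) > 1 - eps) ->
  forall theta, 0 <= theta < 2 * PI -> forall delta eps, 0 < delta -> 0 < eps ->
    exists r, 1 - delta < r < 1 /\
      Series (lac_term h A (polar r theta)) / Rabs (ln (1 - r)) >= 1/4 - eps.
Proof.
  intros Hsup theta Hth delta eps Hd He.
  destruct (INR_archimed 1 (Rmax (18 * B * INR A) (Rmax (6 / delta) 6)) ltac:(lra)) as [m Hm].
  rewrite Rmult_1_r in Hm.
  assert (Hm1 := Rle_lt_trans _ _ _ (Rmax_l _ _) Hm).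
  assert (Hm2 := Rle_lt_trans _ _ _ (Rle_trans _ _ _ (Rmax_l _ _) (Rmax_r _ _)) Hm).
  assert (Hm3 := Rle_lt_trans _ _ _ (Rle_trans _ _ _ (Rmax_r _ _) (Rmax_r _ _)) Hm).
  destruct m as [|m]; [simpl in Hm3; lra|].
  set (M := (A ^ S m)%nat) in *. set (Nn := (2 ^ M)%nat).
  destruct (lacunary_exponent_facts A (S m) ltac:(lia)) as (F1 & F2 & F3). fold M Nn in F1, F2, F3.
  assert (IM : INR (S m) < INR M) by (apply lt_INR; lia).
  assert (IN : INR M < INR Nn) by (apply lt_INR; lia).
  destruct (polar_reduce 1 theta Nn ltac:(lra)) as [th' [Hth' Eth']].
  destruct (Hsup th' Hth' (1/4) ltac:(lra)) as [rho [Hrho Hh]].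
  destruct (nth_root_near_1 rho Nn Hrho ltac:(lra)) as [r [Hr [HrN [Hup Hlow]]]].
  exists r.
  assert (HNd : 6 / INR Nn < delta).
  { apply (Rmult_lt_reg_r (INR Nn)); [lra|]. unfold Rdiv. rewrite Rmult_assoc, Rinv_l by lra.
    apply (Rmult_lt_reg_r (/ delta)); [apply Rinv_0_lt_compat; lra|].
    replace (delta * INR Nn * / delta) with (INR Nn) by (field; lra). unfold Rdiv in Hm2. lra. }
  split; [lra|].
  assert (HM : 18 * B * INR A <= INR M) by lra.
  assert (Sbig : INR M / 2 <= Series (lac_term h A (polar r theta)))
    by exact (Series_lac_term_ge m theta th' rho r HM Hr HrN ltac:(lra) Eth' ltac:(lra)).
  assert (Lneg : ln (1 - r) < 0) by (rewrite <- ln_1; apply ln_increasing; lra).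
  assert (Lb := minus_ln_one_minus_le M r ltac:(lia) ltac:(lra) Hlow).
  rewrite Rabs_left by lra.
  set (S0 := Series (lac_term h A (polar r theta))) in *.
  assert (1/4 <= S0 / - ln (1 - r)).
  { apply (Rmult_le_reg_r (- ln (1 - r))); [lra|].
    replace (S0 / - ln (1 - r) * - ln (1 - r)) with S0 by (field; lra). lra. }
  lra.
Qed.

End RayLowerBound.

Theorem lemma11 (h : C -> R) (B : R) :
  harmonic_on_D h ->
  0 < B ->
  (forall z, inD z -> Rabs (h z) <= B * Cmod z) ->
  (* max_{1/6<r<1/3} h(r e^{i theta}) >= 1, read as sup >= 1 *)
  (forall theta, 0 <= theta < 2 * PI ->
     forall eps, 0 < eps ->
       exists r, 1/6 < r < 1/3 /\ h (polar r theta) > 1 - eps) ->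
  exists A0 : nat, forall A : nat, (A0 <= A)%nat ->
    let term (z : C) (k : nat) : R :=
      INR (A ^ k) * h (Cpow z (2 ^ (A ^ k))) in
    (forall z, inD z -> ex_series (term z)) /\
    classK (fun z => Series (term z)) /\
    exists d : R, 0 < d /\
      forall theta, 0 <= theta < 2 * PI ->
        forall delta eps, 0 < delta -> 0 < eps ->
          exists r, 1 - delta < r < 1 /\
            Series (term (polar r theta)) / Rabs (ln (1 - r)) >= d - eps.
Proof.
  intros Hh HB Hg Hsup.
  destruct (INR_archimed 1 (8 * B + 1) ltac:(lra)) as [n Hn].
  exists (max 3 n). intros A HA. cbv zeta.
  assert (HA3 : (3 <= A)%nat) by lia.
  assert (HAB : 8 * B <= INR A - 1) by (assert (INR n <= INR A) by (apply le_INR; lia); lra).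
  pose (c k := INR (A ^ k)). pose (N k := (2 ^ (A ^ k))%nat).
  assert (HN : forall k, (1 <= N k)%nat)
    by (intros k; destruct (lacunary_exponent_facts A k ltac:(lia)); unfold N; lia).
  assert (HS := ex_series_lacunary_majorant A ltac:(lia)).
  assert (HW := lacunary_majorant_lim A ltac:(lia)).
  assert (Habs : forall z, inD z -> ex_series (fun k => Rabs (lac_term h A z k))).
  { apply (ex_series_loc_dominated (fun k => comp_pow h (c k) (N k))).
    apply (loc_dominated_comp_pow h B c N); auto; try lra. intros k z M HM. tauto. }
  split; [intros z Hz; apply ex_series_Rabs, Habs, Hz|].
  split; [split|].
  - apply (harmonic_Series_comp_pow h B); auto; lra.
  - exists (8 * B / ln 2). apply (Series_lac_term_le_log h B A); auto; lra || lia.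
  - exists (1/4). split; [lra|]. apply (lac_ray_lower_bound h B A); auto; lra.
Qed.
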